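(* If $\lambda_n\to\infty$, then for every $d>-1$, $$\rho(\psi_d,\lambda_n)=1-\frac{(d-1)^2}{6\lambda_n}+O(\lambda_n^{-2}).$$
   Context: $\lambda_n>0$ is a sequence of parameters; $\xi\sim\mathrm{Poisson}(\lambda_n)$. For a real function $h$ on $[0,\infty)$, $r_n=\lambda_n^{-1}\mathrm{cov}(h(\xi),\xi)$ and $\rho(h,\lambda_n)=\mathrm{corr}(h(\xi)-r_n\xi,\ \xi^2-(2\lambda_n+1)\xi)$. Power divergence functions: $\psi_d(x)=\frac{2}{d(d+1)}x[(x/\lambda_n)^d-1]$ for $d>-1$, $d\ne0$, and $\psi_0(x)=2x\log(x/\lambda_n)$. *)

From Stdlib Require Import Reals.
From Coquelicot Require Import Coquelicot.
Open Scope R_scope.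

Definition pois_pmf (lam : R) (k : nat) : R :=
  exp (- lam) * lam ^ k / INR (Factorial.fact k).

Definition pois_E (lam : R) (f : R -> R) : R :=
  Series (fun k => f (INR k) * pois_pmf lam k).

Definition pois_cov (lam : R) (f g : R -> R) : R :=
  pois_E lam (fun x => f x * g x) - pois_E lam f * pois_E lam g.

Definition pois_var (lam : R) (f : R -> R) : R := pois_cov lam f f.

Definition pois_corr (lam : R) (f g : R -> R) : R :=
  pois_cov lam f g / sqrt (pois_var lam f * pois_var lam g).

Definition r_coef (h : R -> R) (lam : R) : R :=
  pois_cov lam h (fun x => x) / lam.

Definition rho (h : R -> R) (lam : R) : R :=
  pois_corr lam (fun x => h x - r_coef h lam * x)
                (fun x => x ^ 2 - (2 * lam + 1) * x).

(* Power divergence function psi_d (depending on lam).  At x = 0 the value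
   is 0 (the continuous extension): Rpower 0 d = 1 and ln 0 = 0 in Stdlib,
   and both are multiplied by x = 0. *)
Definition psi (d lam x : R) : R :=
  if Req_EM_T d 0 then 2 * x * ln (x / lam)
  else 2 / (d * (d + 1)) * x * (Rpower (x / lam) d - 1).

(* Write U = (xi - lam) / lam.  Then psi_d(xi) = lam F(U) + 2/(d+1) (xi - lam), where
   F(u) = phi(1 + u), phi(t) = 2 (t^(d+1) - 1 - (d+1)(t-1)) / (d(d+1)) (the limit
   2 (t ln t - t + 1) if d = 0), and Taylor's theorem gives
   F(u) = u^2 + a u^3 + b u^4 + O(|u|^5 (1 + |u|)^M), a = (d-1)/3, b = (d-1)(d-2)/12.
   Subtracting r xi projects out the linear part, so rho is the partial correlation of
   F(U) and the second Charlier polynomial Z = U^2 - U/lam - 1/lam given 1 and U: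
   rho > 0 for large lam and rho^2 = 1 - R2/R1, where R1 and R2 are the residual
   variances of F(U) after projecting onto span{1, U} and span{1, U, Z}.  For the
   quartic part these are polynomials in 1/lam computed from the Poisson moments
   E[U^j], j <= 8: R1 = 2/lam^2 + O(lam^-3) and R2 = 6 a^2/lam^3 + O(lam^-4).  The
   remainder S(U) has E[S^2] = O(lam^-5), and by Cauchy-Schwarz for the residual forms
   it moves R1 and R2 by O(lam^-4) only.  Hence 1 - rho^2 = 3 a^2/lam + O(lam^-2), that
   is rho = 1 - (d-1)^2/(6 lam) + O(lam^-2). *)

From Stdlib Require Import Reals Lra Lia List.
From Coquelicot Require Import Coquelicot.
Open Scope R_scope.
Import ListNotations.

(** * Expectations under the Poisson law *)

(* Growth condition on the support of the Poisson law; it makes every [pois_E]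
   below an absolutely convergent series. *)
Definition poly_bounded (f : R -> R) : Prop :=
  exists C m, forall k : nat, Rabs (f (INR k)) <= C * (1 + INR k) ^ m.

Lemma pois_pmf_nonneg lam k : 0 <= lam -> 0 <= pois_pmf lam k.
Proof.
  intros Hl. unfold pois_pmf. apply Rmult_le_pos.
  - apply Rmult_le_pos; [left; apply exp_pos | apply pow_le; lra].
  - left. apply Rinv_0_lt_compat, lt_0_INR, Factorial.lt_O_fact.
Qed.

Lemma pois_pmf_succ lam k : pois_pmf lam (S k) = lam / INR (S k) * pois_pmf lam k.
Proof.
  unfold pois_pmf. rewrite fact_simpl, mult_INR. simpl pow.
  assert (0 < INR (S k)) by apply lt_0_INR, Nat.lt_0_succ.
  assert (0 < INR (Factorial.fact k)) by apply lt_0_INR, Factorial.lt_O_fact.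
  field. lra.
Qed.

Lemma is_series_pois_pmf lam : is_series (pois_pmf lam) 1.
Proof.
  assert (H := proj2_sig (exist_exp lam)). simpl in H.
  change (proj1_sig (exist_exp lam)) with (exp lam) in H.
  apply is_series_Reals, (is_series_scal_l (exp (- lam))) in H.
  rewrite <- exp_plus, Rplus_opp_l, exp_0 in H.
  eapply is_series_ext; [|exact H].
  intros n. unfold pois_pmf, scal; simpl. unfold mult; simpl. field.
  apply not_0_INR, Nat.neq_0_lt_0, Factorial.lt_O_fact.
Qed.

Lemma poly_bounded_nonneg f : poly_bounded f ->
  exists C m, 0 <= C /\ forall k : nat, Rabs (f (INR k)) <= C * (1 + INR k) ^ m.
Proof.
  intros [C [m Hf]]. exists (Rabs C), m. split; [apply Rabs_pos|].
  intros k. eapply Rle_trans; [apply Hf|]. apply Rmult_le_compat_r; [|apply RRle_abs].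
  apply pow_le. generalize (pos_INR k). lra.
Qed.

Lemma poly_bounded_const c : poly_bounded (fun _ => c).
Proof. exists (Rabs c), 0%nat. intros k. simpl. lra. Qed.

Lemma poly_bounded_id : poly_bounded (fun x => x).
Proof. exists 1, 1%nat. intros k. rewrite Rabs_pos_eq by apply pos_INR. simpl. lra. Qed.

Lemma poly_bounded_le f g :
  (forall k : nat, Rabs (f (INR k)) <= Rabs (g (INR k))) -> poly_bounded g -> poly_bounded f.
Proof. intros H [C [m Hg]]. exists C, m. intros k. eapply Rle_trans; [apply H | apply Hg]. Qed.

Lemma poly_bounded_plus f g :
  poly_bounded f -> poly_bounded g -> poly_bounded (fun x => f x + g x).
Proof.
  intros Hf Hg.
  destruct (poly_bounded_nonneg f Hf) as [C1 [m1 [HC1 H1]]].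
  destruct (poly_bounded_nonneg g Hg) as [C2 [m2 [HC2 H2]]].
  exists (C1 + C2), (m1 + m2)%nat. intros k.
  assert (Hk : 1 <= 1 + INR k) by (generalize (pos_INR k); lra).
  assert (E1 : (1 + INR k) ^ m1 <= (1 + INR k) ^ (m1 + m2)) by (apply Rle_pow; [lra | lia]).
  assert (E2 : (1 + INR k) ^ m2 <= (1 + INR k) ^ (m1 + m2)) by (apply Rle_pow; [lra | lia]).
  specialize (H1 k). specialize (H2 k).
  eapply Rle_trans; [apply Rabs_triang|]. nra.
Qed.

Lemma poly_bounded_mult f g :
  poly_bounded f -> poly_bounded g -> poly_bounded (fun x => f x * g x).
Proof.
  intros Hf Hg.
  destruct (poly_bounded_nonneg f Hf) as [C1 [m1 [HC1 H1]]].
  destruct (poly_bounded_nonneg g Hg) as [C2 [m2 [HC2 H2]]].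
  exists (C1 * C2), (m1 + m2)%nat. intros k. rewrite Rabs_mult, pow_add.
  replace (C1 * C2 * ((1 + INR k) ^ m1 * (1 + INR k) ^ m2))
    with (C1 * (1 + INR k) ^ m1 * (C2 * (1 + INR k) ^ m2)) by ring.
  apply Rmult_le_compat; auto; apply Rabs_pos.
Qed.

Lemma poly_bounded_scal c f : poly_bounded f -> poly_bounded (fun x => c * f x).
Proof. intros Hf. apply poly_bounded_mult; auto. apply poly_bounded_const. Qed.

Lemma poly_bounded_minus f g :
  poly_bounded f -> poly_bounded g -> poly_bounded (fun x => f x - g x).
Proof.
  intros Hf Hg. apply (poly_bounded_le _ (fun x => f x + (-1) * g x)).
  - intros k. right. f_equal. ring.
  - apply poly_bounded_plus, poly_bounded_scal; auto.
Qed.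

Lemma poly_bounded_pow f n : poly_bounded f -> poly_bounded (fun x => f x ^ n).
Proof.
  intros Hf. induction n as [|n IH]; simpl.
  - apply poly_bounded_const.
  - apply poly_bounded_mult; auto.
Qed.

Lemma poly_bounded_abs f : poly_bounded f -> poly_bounded (fun x => Rabs (f x)).
Proof. apply poly_bounded_le. intros k. rewrite Rabs_Rabsolu. lra. Qed.

Section Expectation.

Variable lam : R.
Hypothesis Hlam : 0 <= lam.

Lemma ex_series_pois_poly_weight m :
  ex_series (fun k => (1 + INR k) ^ m * pois_pmf lam k).
Proof.
  induction m as [|m IH].
  - apply (ex_series_ext (pois_pmf lam)); [intros; simpl; ring|].
    eexists; apply is_series_pois_pmf.
  - (* the extra factor [INR k] is absorbed by the shift [pois_pmf_succ] *)
    assert (Hk : ex_series (fun k => INR k * (1 + INR k) ^ m * pois_pmf lam k)).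
    { apply ex_series_incr_1.
      apply (@ex_series_le R_AbsRing R_CompleteNormedModule _
               (fun k => lam * 2 ^ m * ((1 + INR k) ^ m * pois_pmf lam k))).
      - intros k. rewrite pois_pmf_succ, S_INR.
        assert (0 <= INR k) by apply pos_INR.
        assert (0 <= pois_pmf lam k) by (apply pois_pmf_nonneg; auto).
        replace ((INR k + 1) * (1 + (INR k + 1)) ^ m * (lam / (INR k + 1) * pois_pmf lam k))
          with (lam * (2 + INR k) ^ m * pois_pmf lam k)
          by (replace (1 + (INR k + 1)) with (2 + INR k) by ring; field; lra).
        assert ((2 + INR k) ^ m <= 2 ^ m * (1 + INR k) ^ m).
        { rewrite <- Rpow_mult_distr. apply pow_incr. lra. }
        change (norm (lam * (2 + INR k) ^ m * pois_pmf lam k))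
          with (Rabs (lam * (2 + INR k) ^ m * pois_pmf lam k)).
        assert (0 <= (2 + INR k) ^ m) by (apply pow_le; lra).
        rewrite Rabs_pos_eq by (apply Rmult_le_pos; [apply Rmult_le_pos|]; lra).
        replace (lam * 2 ^ m * ((1 + INR k) ^ m * pois_pmf lam k))
          with (lam * (2 ^ m * (1 + INR k) ^ m) * pois_pmf lam k) by ring.
        apply Rmult_le_compat_r, Rmult_le_compat_l; auto.
      - exact (ex_series_scal_l (lam * 2 ^ m) _ IH). }
    eapply ex_series_ext; [|exact (ex_series_plus _ _ IH Hk)].
    intros k. simpl. unfold plus; simpl. ring.
Qed.

Lemma ex_series_pois_E f :
  poly_bounded f -> ex_series (fun k => f (INR k) * pois_pmf lam k).
Proof.
  intros [C [m Hf]]. apply ex_series_Rabs.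
  apply (@ex_series_le R_AbsRing R_CompleteNormedModule _
           (fun k => C * ((1 + INR k) ^ m * pois_pmf lam k))).
  - intros k. change (norm (Rabs (f (INR k) * pois_pmf lam k)))
      with (Rabs (Rabs (f (INR k) * pois_pmf lam k))).
    rewrite Rabs_Rabsolu, Rabs_mult, (Rabs_pos_eq (pois_pmf lam k))
      by (apply pois_pmf_nonneg; auto).
    rewrite <- Rmult_assoc. apply Rmult_le_compat_r; [apply pois_pmf_nonneg; auto | apply Hf].
  - exact (ex_series_scal_l C _ (ex_series_pois_poly_weight m)).
Qed.

Lemma pois_E_ext f g :
  (forall k : nat, f (INR k) = g (INR k)) -> pois_E lam f = pois_E lam g.
Proof. intros H. apply Series_ext. intros k. now rewrite H. Qed.

Lemma pois_E_plus f g : poly_bounded f -> poly_bounded g ->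
  pois_E lam (fun x => f x + g x) = pois_E lam f + pois_E lam g.
Proof.
  intros Hf Hg. unfold pois_E.
  rewrite <- Series_plus by (apply ex_series_pois_E; auto).
  apply Series_ext. intros; ring.
Qed.

Lemma pois_E_scal c f : pois_E lam (fun x => c * f x) = c * pois_E lam f.
Proof. unfold pois_E. rewrite <- Series_scal_l. apply Series_ext. intros; ring. Qed.

Lemma pois_E_const c : pois_E lam (fun _ => c) = c.
Proof.
  unfold pois_E. rewrite Series_scal_l, (is_series_unique _ _ (is_series_pois_pmf lam)).
  ring.
Qed.

Lemma pois_E_nonneg f : poly_bounded f -> (forall k : nat, 0 <= f (INR k)) ->
  0 <= pois_E lam f.
Proof.
  intros Hf Hpos. unfold pois_E.
  replace 0 with (Series (fun k => 0 * pois_pmf lam k)) by (rewrite Series_scal_l; ring).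
  apply Series_le.
  - intros k. rewrite Rmult_0_l. split; [lra|].
    apply Rmult_le_pos; [apply Hpos | apply pois_pmf_nonneg; auto].
  - apply ex_series_pois_E; auto.
Qed.

Lemma pois_E_minus f g : poly_bounded f -> poly_bounded g ->
  pois_E lam (fun x => f x - g x) = pois_E lam f - pois_E lam g.
Proof.
  intros Hf Hg.
  rewrite (pois_E_ext (fun x => f x - g x) (fun x => f x + (-1) * g x)) by (intros; ring).
  rewrite pois_E_plus, pois_E_scal by (try apply poly_bounded_scal; auto). ring.
Qed.

Lemma pois_E_le f g : poly_bounded f -> poly_bounded g ->
  (forall k : nat, f (INR k) <= g (INR k)) -> pois_E lam f <= pois_E lam g.
Proof.
  intros Hf Hg H.
  assert (0 <= pois_E lam (fun x => g x - f x)).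
  { apply pois_E_nonneg; [apply poly_bounded_minus; auto|]. intros k. specialize (H k). lra. }
  rewrite pois_E_minus in H0; auto. lra.
Qed.

Lemma pois_E_sum (g : nat -> R -> R) n : (forall i, poly_bounded (g i)) ->
  pois_E lam (fun x => sum_f_R0 (fun i => g i x) n) = sum_f_R0 (fun i => pois_E lam (g i)) n.
Proof.
  intros Hg. induction n as [|n IH]; simpl; auto.
  rewrite pois_E_plus, IH; auto.
  clear IH. induction n as [|n IH]; simpl; auto. apply poly_bounded_plus; auto.
Qed.

Lemma pois_E_stein f : poly_bounded f ->
  pois_E lam (fun x => (x - lam) * f x) = lam * (pois_E lam (fun x => f (x + 1)) - pois_E lam f).
Proof.
  intros Hf.
  assert (Hxf : pois_E lam (fun x => x * f x) = lam * pois_E lam (fun x => f (x + 1))).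
  { unfold pois_E. rewrite Series_incr_1.
    2:{ apply (ex_series_pois_E (fun x => x * f x)), poly_bounded_mult; auto.
        apply poly_bounded_id. }
    rewrite <- Series_scal_l. simpl INR at 1. rewrite !Rmult_0_l, Rplus_0_l.
    apply Series_ext. intros k. rewrite pois_pmf_succ, S_INR.
    generalize (pos_INR k). intros. field. lra. }
  rewrite (pois_E_ext _ (fun x => x * f x - lam * f x)) by (intros; ring).
  rewrite pois_E_minus, Hxf, pois_E_scal.
  - ring.
  - apply poly_bounded_mult; auto. apply poly_bounded_id.
  - apply poly_bounded_scal; auto.
Qed.

End Expectation.

(** * Polynomials and moments of the relative deviation *)

(* Polynomials are coefficient lists, constant term first. *)
Fixpoint horner (l : list R) (u : R) : R :=
  match l with [] => 0 | c :: l' => c + u * horner l' u end.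

Fixpoint poly_add (p q : list R) : list R :=
  match p, q with
  | [], _ => q
  | _, [] => p
  | a :: p', b :: q' => (a + b) :: poly_add p' q'
  end.

Fixpoint poly_mul (p q : list R) : list R :=
  match p with [] => [] | c :: p' => poly_add (map (Rmult c) q) (0 :: poly_mul p' q) end.

Fixpoint poly_pow (p : list R) (n : nat) : list R :=
  match n with O => [1] | S n => poly_mul p (poly_pow p n) end.

Lemma horner_add p q u : horner (poly_add p q) u = horner p u + horner q u.
Proof.
  revert q. induction p as [|a p IH]; intros [|b q]; simpl; try ring.
  rewrite IH. ring.
Qed.

Lemma horner_scal c q u : horner (map (Rmult c) q) u = c * horner q u.
Proof. induction q as [|b q IH]; simpl; [ring|]. rewrite IH. ring. Qed.

Lemma horner_mul p q u : horner (poly_mul p q) u = horner p u * horner q u.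
Proof.
  induction p as [|a p IH]; simpl; [ring|].
  rewrite horner_add, horner_scal. simpl. rewrite IH. ring.
Qed.

Lemma horner_pow p n u : horner (poly_pow p n) u = horner p u ^ n.
Proof. induction n as [|n IH]; simpl; [ring|]. rewrite horner_mul, IH. ring. Qed.

Fixpoint coef_abs_sum (l : list R) : R :=
  match l with [] => 0 | c :: l' => Rabs c + coef_abs_sum l' end.

Lemma coef_abs_sum_nonneg l : 0 <= coef_abs_sum l.
Proof. induction l as [|c l IH]; simpl; [lra|]. generalize (Rabs_pos c). lra. Qed.

Lemma horner_abs_le l u : Rabs u <= 1 -> Rabs (horner l u) <= coef_abs_sum l.
Proof.
  intros Hu. induction l as [|c l IH]; simpl; [rewrite Rabs_R0; lra|].
  eapply Rle_trans; [apply Rabs_triang|]. rewrite Rabs_mult.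
  assert (Rabs u * Rabs (horner l u) <= 1 * coef_abs_sum l)
    by (apply Rmult_le_compat; auto using Rabs_pos).
  lra.
Qed.

Lemma poly_bounded_horner l phi : poly_bounded phi -> poly_bounded (fun x => horner l (phi x)).
Proof.
  intros H. induction l as [|c l IH]; simpl.
  - apply poly_bounded_const.
  - apply poly_bounded_plus, poly_bounded_mult; auto. apply poly_bounded_const.
Qed.

Fixpoint moment_sum (m : nat -> R) (i : nat) (l : list R) : R :=
  match l with [] => 0 | c :: l' => c * m i + moment_sum m (S i) l' end.

Lemma moment_sum_ext m m' i l : (forall j, (j < i + length l)%nat -> m j = m' j) ->
  moment_sum m i l = moment_sum m' i l.
Proof.
  revert i. induction l as [|c l IH]; intros i H; simpl; auto.
  simpl in H. rewrite H, IH; auto; [intros j Hj; apply H|]; lia.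
Qed.

Lemma pois_E_horner lam phi l : 0 <= lam -> poly_bounded phi ->
  pois_E lam (fun x => horner l (phi x))
  = moment_sum (fun j => pois_E lam (fun x => phi x ^ j)) 0 l.
Proof.
  intros Hl Hphi.
  assert (H : forall i, pois_E lam (fun x => horner l (phi x) * phi x ^ i)
                        = moment_sum (fun j => pois_E lam (fun x => phi x ^ j)) i l).
  { induction l as [|c l IH]; intros i; simpl.
    - rewrite (pois_E_ext lam _ (fun _ => 0)) by (intros; ring). apply pois_E_const.
    - rewrite (pois_E_ext lam _ (fun x => c * phi x ^ i + horner l (phi x) * phi x ^ S i))
        by (intros; simpl; ring).
      rewrite pois_E_plus, pois_E_scal, IH; auto.
      + apply poly_bounded_scal, poly_bounded_pow; auto.
      + apply poly_bounded_mult; [apply poly_bounded_horner | apply poly_bounded_pow]; auto. }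
  rewrite <- H. apply pois_E_ext. intros. simpl. ring.
Qed.

Definition reldev (lam x : R) : R := (x - lam) / lam.

Lemma poly_bounded_reldev lam : poly_bounded (reldev lam).
Proof.
  apply (poly_bounded_le _ (fun x => / lam * x - / lam * lam)).
  - intros k. right. unfold reldev, Rdiv. f_equal. ring.
  - apply poly_bounded_minus; [apply poly_bounded_scal, poly_bounded_id | apply poly_bounded_const].
Qed.

Lemma pois_E_reldev_pow_succ lam k : 0 < lam ->
  pois_E lam (fun x => reldev lam x ^ S k)
  = moment_sum (fun j => pois_E lam (fun x => reldev lam x ^ j)) 0 (poly_pow [/ lam; 1] k)
    - pois_E lam (fun x => reldev lam x ^ k).
Proof.
  intros Hl.
  assert (Hk : poly_bounded (fun x => reldev lam x ^ k))
    by apply poly_bounded_pow, poly_bounded_reldev.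
  rewrite (pois_E_ext lam _ (fun x => / lam * ((x - lam) * reldev lam x ^ k)))
    by (intros; unfold reldev; simpl; field; lra).
  rewrite pois_E_scal, pois_E_stein by (auto; lra).
  rewrite <- pois_E_horner by (try lra; apply poly_bounded_reldev).
  rewrite (pois_E_ext lam (fun x => reldev lam (x + 1) ^ k)
             (fun x => horner (poly_pow [/ lam; 1] k) (reldev lam x))).
  - field. lra.
  - intros n. rewrite horner_pow. simpl. f_equal. unfold reldev. field. lra.
Qed.

(* The moments of [reldev lam] as polynomials in [x = / lam]; only the entries
   j <= 8 are meaningful (see [pois_E_reldev_pow]). *)
Definition reldev_moment (x : R) (j : nat) : R :=
  match j with
  | 0 => 1
  | 1 => 0
  | 2 => x
  | 3 => x ^ 2
  | 4 => 3 * x ^ 2 + x ^ 3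
  | 5 => 10 * x ^ 3 + x ^ 4
  | 6 => 15 * x ^ 3 + 25 * x ^ 4 + x ^ 5
  | 7 => 105 * x ^ 4 + 56 * x ^ 5 + x ^ 6
  | 8 => 105 * x ^ 4 + 490 * x ^ 5 + 119 * x ^ 6 + x ^ 7
  | _ => 0
  end.

Lemma pois_E_reldev_pow lam j : 0 < lam -> (j <= 8)%nat ->
  pois_E lam (fun x => reldev lam x ^ j) = reldev_moment (/ lam) j.
Proof.
  intros Hl Hj.
  set (m := fun j => pois_E lam (fun x => reldev lam x ^ j)).
  change (m j = reldev_moment (/ lam) j).
  assert (Hstep : forall k, m (S k) = moment_sum m 0 (poly_pow [/ lam; 1] k) - m k)
    by (intros; apply pois_E_reldev_pow_succ; auto).
  assert (M0 : m 0%nat = 1) by (unfold m; simpl; apply pois_E_const).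
  assert (M1 : m 1%nat = 0) by (rewrite Hstep; simpl; rewrite M0; ring).
  assert (M2 : m 2%nat = / lam) by (rewrite Hstep; simpl; rewrite M0, M1; ring).
  assert (M3 : m 3%nat = (/ lam) ^ 2) by (rewrite Hstep; simpl; rewrite M0, M1, M2; ring).
  assert (M4 : m 4%nat = 3 * (/ lam) ^ 2 + (/ lam) ^ 3)
    by (rewrite Hstep; simpl; rewrite M0, M1, M2, M3; ring).
  assert (M5 : m 5%nat = 10 * (/ lam) ^ 3 + (/ lam) ^ 4)
    by (rewrite Hstep; simpl; rewrite M0, M1, M2, M3, M4; ring).
  assert (M6 : m 6%nat = 15 * (/ lam) ^ 3 + 25 * (/ lam) ^ 4 + (/ lam) ^ 5)
    by (rewrite Hstep; simpl; rewrite M0, M1, M2, M3, M4, M5; ring).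
  assert (M7 : m 7%nat = 105 * (/ lam) ^ 4 + 56 * (/ lam) ^ 5 + (/ lam) ^ 6)
    by (rewrite Hstep; simpl; rewrite M0, M1, M2, M3, M4, M5, M6; ring).
  assert (M8 : m 8%nat
               = 105 * (/ lam) ^ 4 + 490 * (/ lam) ^ 5 + 119 * (/ lam) ^ 6 + (/ lam) ^ 7)
    by (rewrite Hstep; simpl; rewrite M0, M1, M2, M3, M4, M5, M6, M7; ring).
  do 9 (destruct j as [|j]; [assumption|]). lia.
Qed.

Definition pois_cmoment (lam : R) (j : nat) : R := pois_E lam (fun x => (x - lam) ^ j).

Lemma binom_nonneg n i : 0 <= Binomial.C n i.
Proof.
  unfold Binomial.C. apply Rmult_le_pos; [apply pos_INR|].
  left. apply Rinv_0_lt_compat, Rmult_lt_0_compat; apply lt_0_INR, Factorial.lt_O_fact.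
Qed.

Lemma binom_diag n : Binomial.C n n = 1.
Proof.
  unfold Binomial.C. rewrite Nat.sub_diag. simpl (Factorial.fact 0). simpl (INR 1).
  assert (0 < INR (Factorial.fact n)) by apply lt_0_INR, Factorial.lt_O_fact.
  field. lra.
Qed.

Lemma binom_sum n : sum_f_R0 (fun i => Binomial.C n i) n = 2 ^ n.
Proof.
  replace 2 with (1 + 1) by ring. rewrite binomial.
  apply sum_eq. intros i _. rewrite !pow1. ring.
Qed.

Lemma pois_cmoment_succ lam k : 0 <= lam ->
  pois_cmoment lam (S k)
  = lam * (sum_f_R0 (fun i => Binomial.C k i * pois_cmoment lam i) k - pois_cmoment lam k).
Proof.
  intros Hl. unfold pois_cmoment.
  assert (HY : forall i, poly_bounded (fun x => (x - lam) ^ i)).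
  { intros. apply poly_bounded_pow, poly_bounded_minus;
      [apply poly_bounded_id | apply poly_bounded_const]. }
  rewrite (pois_E_ext lam _ (fun x => (x - lam) * (x - lam) ^ k)) by (intros; reflexivity).
  rewrite pois_E_stein by auto. f_equal. f_equal.
  rewrite (pois_E_ext lam _ (fun x => sum_f_R0 (fun i => Binomial.C k i * (x - lam) ^ i) k)).
  - rewrite pois_E_sum by (first [assumption | intros; apply poly_bounded_scal; auto]).
    apply sum_eq. intros i _. apply pois_E_scal.
  - intros n. replace (INR n + 1 - lam) with ((INR n - lam) + 1) by ring.
    rewrite binomial. apply sum_eq. intros i _. rewrite pow1. ring.
Qed.

Lemma pois_cmoment_bound k : exists c, 0 <= c /\ forall lam, 1 <= lam ->
  forall j, (j <= k)%nat -> Rabs (pois_cmoment lam j) <= c * lam ^ Nat.div2 j.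
Proof.
  induction k as [|k [c [Hc IH]]].
  - exists 1. split; [lra|]. intros lam Hl j Hj. replace j with 0%nat by lia.
    unfold pois_cmoment. simpl. rewrite pois_E_const, Rabs_R1. lra.
  - exists (2 ^ k * c). split; [apply Rmult_le_pos; [apply pow_le|]; lra|].
    intros lam Hl j Hj.
    assert (H2k : 1 <= 2 ^ k) by (apply pow_R1_Rle; lra).
    assert (Hlj : forall j, 0 <= lam ^ j) by (intros; apply pow_le; lra).
    destruct (Nat.eq_dec j (S k)) as [->|Hne].
    2:{ eapply Rle_trans; [apply IH; auto; lia|].
        apply Rmult_le_compat_r; auto. nra. }
    rewrite pois_cmoment_succ by lra.
    destruct k as [|k].
    { simpl sum_f_R0. rewrite binom_diag, Rmult_1_l, Rminus_diag, Rmult_0_r, Rabs_R0.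
      simpl. nra. }
    (* the top binomial term cancels, leaving indices i <= k, each O(lam ^ div2 k) *)
    replace (sum_f_R0 (fun i => Binomial.C (S k) i * pois_cmoment lam i) (S k)
             - pois_cmoment lam (S k))
      with (sum_f_R0 (fun i => Binomial.C (S k) i * pois_cmoment lam i) k)
      by (simpl; rewrite binom_diag; ring).
    change (Nat.div2 (S (S k))) with (S (Nat.div2 k)).
    rewrite Rabs_mult, (Rabs_pos_eq lam) by lra.
    replace (2 ^ S k * c * lam ^ S (Nat.div2 k))
      with (lam * (c * lam ^ Nat.div2 k * 2 ^ S k)) by (simpl; ring).
    apply Rmult_le_compat_l; [lra|].
    eapply Rle_trans; [apply sum_f_R0_triangle|].
    eapply Rle_trans.
    { apply (sum_Rle _ (fun i => Binomial.C (S k) i * (c * lam ^ Nat.div2 k))).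
      intros i Hi. rewrite Rabs_mult, (Rabs_pos_eq (Binomial.C _ _)) by apply binom_nonneg.
      apply Rmult_le_compat_l; [apply binom_nonneg|].
      eapply Rle_trans; [apply IH; auto; lia|].
      apply Rmult_le_compat_l; auto. apply Rle_pow; auto. apply Nat.div2_le_mono. lia. }
    rewrite <- scal_sum, <- (binom_sum (S k)).
    apply Rmult_le_compat_l; [apply Rmult_le_pos; auto|].
    rewrite tech5. change (fun i => Binomial.C (S k) i) with (Binomial.C (S k)).
    generalize (binom_nonneg (S k) (S k)). lra.
Qed.

Lemma inv_le_1 lam : 1 <= lam -> 0 < / lam <= 1.
Proof.
  intros Hl. split; [apply Rinv_0_lt_compat; lra|].
  rewrite <- Rinv_1. apply Rinv_le_contravar; lra.
Qed.

Lemma pois_E_reldev_even_pow_le k : exists c, 0 <= c /\ forall lam, 1 <= lam ->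
  forall i, (i <= k)%nat -> pois_E lam (fun x => reldev lam x ^ (2 * i)) <= c * (/ lam) ^ i.
Proof.
  destruct (pois_cmoment_bound (2 * k)) as [c [Hc H]]. exists c. split; auto.
  intros lam Hl i Hi.
  specialize (H lam Hl (2 * i)%nat ltac:(lia)). rewrite Nat.div2_double in H.
  rewrite (pois_E_ext lam _ (fun x => (/ lam) ^ (2 * i) * (x - lam) ^ (2 * i)))
    by (intros; unfold reldev, Rdiv; rewrite Rpow_mult_distr; ring).
  rewrite pois_E_scal. fold (pois_cmoment lam (2 * i)).
  destruct (inv_le_1 lam Hl) as [Hx _].
  assert (Hpow : 0 < (/ lam) ^ (2 * i)) by (apply pow_lt; lra).
  eapply Rle_trans.
  { apply Rmult_le_compat_l; [lra|]. eapply Rle_trans; [apply Rle_abs | exact H]. }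
  rewrite pow_mult.
  replace ((/ lam) ^ 2) with (/ lam * / lam) by ring.
  rewrite Rpow_mult_distr.
  replace ((/ lam) ^ i * (/ lam) ^ i * (c * lam ^ i)) with (c * (/ lam) ^ i * (/ lam * lam) ^ i)
    by (rewrite Rpow_mult_distr; ring).
  rewrite Rinv_l, pow1 by lra. lra.
Qed.

Lemma one_plus_pow_le t M : 0 <= t -> (1 + t) ^ (2 * M) <= 4 ^ M * (1 + t ^ (2 * M)).
Proof.
  intros Ht. rewrite !pow_mult.
  assert (H4 : 0 <= 4 ^ M) by (apply pow_le; lra).
  assert (Ht2 : 0 <= (t ^ 2) ^ M) by (apply pow_le; nra).
  destruct (Rle_dec t 1) as [H|H].
  - assert (((1 + t) ^ 2) ^ M <= 4 ^ M) by (apply pow_incr; nra). nra.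
  - assert (((1 + t) ^ 2) ^ M <= (4 * t ^ 2) ^ M) by (apply pow_incr; nra).
    rewrite Rpow_mult_distr in H0. nra.
Qed.

Lemma pois_E_reldev_weighted_le j M : exists c, 0 <= c /\ forall lam, 1 <= lam ->
  pois_E lam (fun x => reldev lam x ^ (2 * j) * (1 + Rabs (reldev lam x)) ^ (2 * M))
  <= c * (/ lam) ^ j.
Proof.
  destruct (pois_E_reldev_even_pow_le (j + M)) as [c [Hc H]].
  exists (4 ^ M * (2 * c)). split; [apply Rmult_le_pos; [apply pow_le|]; lra|].
  intros lam Hl.
  assert (Hx := inv_le_1 lam Hl).
  assert (HU : forall i, poly_bounded (fun x => reldev lam x ^ i))
    by (intros; apply poly_bounded_pow, poly_bounded_reldev).
  eapply Rle_trans.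
  { apply (pois_E_le lam ltac:(lra) _
             (fun x => 4 ^ M * (reldev lam x ^ (2 * j) + reldev lam x ^ (2 * (j + M))))).
    - apply poly_bounded_mult; auto.
      apply poly_bounded_pow, poly_bounded_plus;
        [apply poly_bounded_const | apply poly_bounded_abs, poly_bounded_reldev].
    - apply poly_bounded_scal, poly_bounded_plus; auto.
    - intros k. set (u := reldev lam (INR k)).
      assert (Hu2 : 0 <= u ^ (2 * j)) by (rewrite pow_mult; apply pow_le; nra).
      pose proof (one_plus_pow_le (Rabs u) M (Rabs_pos u)) as HM.
      rewrite RPow_abs, (Rabs_pos_eq (u ^ (2 * M))) in HM
        by (rewrite pow_mult; apply pow_le; nra).
      replace (2 * (j + M))%nat with (2 * j + 2 * M)%nat by lia. rewrite pow_add.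
      replace (4 ^ M * (u ^ (2 * j) + u ^ (2 * j) * u ^ (2 * M)))
        with (u ^ (2 * j) * (4 ^ M * (1 + u ^ (2 * M)))) by ring.
      apply Rmult_le_compat_l; auto. }
  rewrite pois_E_scal, pois_E_plus by (auto; lra).
  assert (H1 := H lam Hl j ltac:(lia)). assert (H2 := H lam Hl (j + M)%nat ltac:(lia)).
  assert ((/ lam) ^ (j + M) <= (/ lam) ^ j).
  { rewrite pow_add. rewrite <- (Rmult_1_r ((/ lam) ^ j)) at 2.
    apply Rmult_le_compat_l; [apply pow_le; lra|]. rewrite <- (pow1 M). apply pow_incr. lra. }
  assert (0 <= 4 ^ M) by (apply pow_le; lra).
  assert (c * (/ lam) ^ (j + M) <= c * (/ lam) ^ j) by (apply Rmult_le_compat_l; auto).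
  nra.
Qed.

(** * Residual inner products *)

Section Residual.

Variable lam : R.
Hypothesis Hlam : 0 <= lam.

Definition inner (f k : R -> R) : R := pois_E lam (fun x => f x * k x).

Definition proj_coef (e f : R -> R) : R := inner f e / inner e e.

(* [resid L f k] is the inner product of the residuals of [f] and [k] after
   projecting onto the span of [L], provided [L] is an orthogonal family; a
   member of norm 0 contributes nothing, as [x / 0 = 0]. *)
Fixpoint resid (L : list (R -> R)) (f k : R -> R) : R :=
  match L with
  | [] => inner f k
  | e :: L' => resid L' f k - inner f e * inner k e / inner e e
  end.

Fixpoint orthogonal (L : list (R -> R)) : Prop :=
  match L with
  | [] => True
  | e :: L' => poly_bounded e /\ List.Forall (fun e' => inner e e' = 0) L' /\ orthogonal L'
  end.

Lemma inner_sym f k : inner f k = inner k f.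
Proof. apply pois_E_ext. intros; ring. Qed.

Lemma inner_lin_l a b f g k : poly_bounded f -> poly_bounded g -> poly_bounded k ->
  inner (fun x => a * f x + b * g x) k = a * inner f k + b * inner g k.
Proof.
  intros Hf Hg Hk. unfold inner.
  rewrite (pois_E_ext lam _ (fun x => a * (f x * k x) + b * (g x * k x))) by (intros; ring).
  rewrite pois_E_plus, !pois_E_scal by (auto; apply poly_bounded_scal, poly_bounded_mult; auto).
  reflexivity.
Qed.

Lemma inner_self_nonneg f : poly_bounded f -> 0 <= inner f f.
Proof.
  intros Hf. apply pois_E_nonneg; auto.
  - apply poly_bounded_mult; auto.
  - intros; apply Rle_0_sqr.
Qed.

Lemma resid_ext L f f' k k' :
  (forall n : nat, f (INR n) = f' (INR n)) -> (forall n : nat, k (INR n) = k' (INR n)) ->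
  resid L f k = resid L f' k'.
Proof.
  intros Hf Hk.
  assert (Hi : forall g g', (forall n : nat, g (INR n) = g' (INR n)) -> forall e,
            inner g e = inner g' e).
  { intros g g' Hg e. apply pois_E_ext. intros n. now rewrite Hg. }
  induction L as [|e L IH]; simpl.
  - rewrite (Hi f f' Hf). rewrite !(inner_sym f'). now apply Hi.
  - now rewrite IH, (Hi f f' Hf), (Hi k k' Hk).
Qed.

Lemma resid_sym L f k : resid L f k = resid L k f.
Proof.
  induction L as [|e L IH]; simpl; [apply inner_sym|]. rewrite IH. unfold Rdiv. ring.
Qed.

Lemma resid_lin_l L a b f g k : orthogonal L ->
  poly_bounded f -> poly_bounded g -> poly_bounded k ->
  resid L (fun x => a * f x + b * g x) k = a * resid L f k + b * resid L g k.
Proof.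
  intros HL Hf Hg Hk. induction L as [|e L IH]; simpl.
  - apply inner_lin_l; auto.
  - destruct HL as [He [_ HL]]. rewrite IH, inner_lin_l by auto.
    destruct (Req_dec (inner e e) 0) as [E|E].
    + rewrite E. unfold Rdiv. rewrite Rinv_0. ring.
    + field. auto.
Qed.

Lemma resid_lin_r L a b f g k : orthogonal L ->
  poly_bounded f -> poly_bounded g -> poly_bounded k ->
  resid L k (fun x => a * f x + b * g x) = a * resid L k f + b * resid L k g.
Proof.
  intros. rewrite resid_sym, resid_lin_l by auto. rewrite !(resid_sym L k). reflexivity.
Qed.

Lemma resid_orth_l L e k : List.Forall (fun e' => inner e e' = 0) L -> resid L e k = inner e k.
Proof.
  induction L as [|e' L IH]; simpl; intros H; auto.
  inversion H as [|? ? He HL]. rewrite IH, He by auto. unfold Rdiv. ring.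
Qed.

Lemma resid_cons_orth_r L e f k : inner k e = 0 -> resid (e :: L) f k = resid L f k.
Proof. intros H. simpl. rewrite H. unfold Rdiv. ring. Qed.

Lemma resid_self_l L e k : List.Forall (fun e' => inner e e' = 0) L -> inner e e <> 0 ->
  resid (e :: L) e k = 0.
Proof.
  intros HL He. simpl. rewrite resid_orth_l by auto. rewrite inner_sym. field. auto.
Qed.

Lemma resid_cons_proj L e f k : orthogonal (e :: L) ->
  poly_bounded f -> poly_bounded k ->
  resid (e :: L) f k
  = resid L (fun x => f x - proj_coef e f * e x) (fun x => k x - proj_coef e k * e x).
Proof.
  intros [He [HeL HL]] Hf Hk.
  change (resid (e :: L) f k) with (resid L f k - inner f e * inner k e / inner e e).
  rewrite (resid_ext L (fun x => f x - proj_coef e f * e x)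
                       (fun x => 1 * f x + (- proj_coef e f) * e x)
                       (fun x => k x - proj_coef e k * e x)
                       (fun x => 1 * k x + (- proj_coef e k) * e x)) by (intros; ring).
  assert (Hk' : poly_bounded (fun x => 1 * k x + (- proj_coef e k) * e x))
    by (apply poly_bounded_plus; apply poly_bounded_scal; auto).
  rewrite resid_lin_l, !resid_lin_r by auto.
  rewrite (resid_sym L f e), !(resid_orth_l L e) by auto.
  unfold proj_coef. rewrite (inner_sym e f), (inner_sym e k).
  destruct (Req_dec (inner e e) 0) as [E|E].
  - rewrite E. unfold Rdiv. rewrite Rinv_0. ring.
  - field. auto.
Qed.

Lemma resid_nonneg L f : orthogonal L -> poly_bounded f -> 0 <= resid L f f.
Proof.
  revert f. induction L as [|e L IH]; intros f HL Hf; simpl in HL.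
  - apply inner_self_nonneg; auto.
  - rewrite resid_cons_proj by (simpl; auto).
    apply IH; [tauto|]. apply poly_bounded_minus, poly_bounded_scal; tauto.
Qed.

Lemma resid_le_inner L f : orthogonal L -> poly_bounded f -> resid L f f <= inner f f.
Proof.
  intros HL Hf. induction L as [|e L IH]; simpl; [lra|].
  destruct HL as [He [_ HL]].
  assert (0 <= inner f e * inner f e / inner e e).
  { destruct (Req_dec (inner e e) 0) as [E|E].
    - rewrite E. unfold Rdiv. rewrite Rinv_0. lra.
    - apply Rdiv_le_0_compat; [apply Rle_0_sqr|].
      generalize (inner_self_nonneg e He). lra. }
  specialize (IH HL). lra.
Qed.

Lemma resid_quad L a b f s : orthogonal L -> poly_bounded f -> poly_bounded s ->
  resid L (fun x => a * f x + b * s x) (fun x => a * f x + b * s x)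
  = a ^ 2 * resid L f f + 2 * a * b * resid L f s + b ^ 2 * resid L s s.
Proof.
  intros HL Hf Hs.
  assert (Hfs : poly_bounded (fun x => a * f x + b * s x))
    by (apply poly_bounded_plus; apply poly_bounded_scal; auto).
  rewrite resid_lin_l, !resid_lin_r by auto. rewrite (resid_sym L s f). ring.
Qed.

Lemma resid_cross_le L f s t : orthogonal L -> poly_bounded f -> poly_bounded s -> 0 < t ->
  2 * Rabs (resid L f s) <= t * resid L f f + resid L s s / t.
Proof.
  intros HL Hf Hs Ht.
  (* expand 0 <= resid (t f +- s) (t f +- s) and divide by t *)
  assert (Hp := resid_nonneg L (fun x => t * f x + 1 * s x) HL).
  assert (Hm := resid_nonneg L (fun x => t * f x + (-1) * s x) HL).
  rewrite resid_quad in Hp, Hm by auto.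
  assert (Hpp : poly_bounded (fun x => t * f x + 1 * s x))
    by (apply poly_bounded_plus; apply poly_bounded_scal; auto).
  assert (Hpm : poly_bounded (fun x => t * f x + (-1) * s x))
    by (apply poly_bounded_plus; apply poly_bounded_scal; auto).
  specialize (Hp Hpp). specialize (Hm Hpm).
  apply (Rmult_le_reg_l t); auto.
  replace (t * (t * resid L f f + resid L s s / t)) with
    (t ^ 2 * resid L f f + resid L s s) by (field; lra).
  destruct (Rcase_abs (resid L f s)); [rewrite Rabs_left | rewrite Rabs_right]; auto; nra.
Qed.

Lemma resid_perturb L f s t : orthogonal L -> poly_bounded f -> poly_bounded s -> 0 < t ->
  Rabs (resid L (fun x => f x + s x) (fun x => f x + s x) - resid L f f)
  <= t * resid L f f + (1 + / t) * inner s s.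
Proof.
  intros HL Hf Hs Ht.
  rewrite (resid_ext L _ (fun x => 1 * f x + 1 * s x) _ (fun x => 1 * f x + 1 * s x))
    by (intros; ring).
  rewrite resid_quad by auto.
  assert (Hc := resid_cross_le L f s t HL Hf Hs Ht).
  assert (H0 := resid_nonneg L s HL Hs).
  assert (H1 := resid_le_inner L s HL Hs).
  assert (Hd : resid L s s / t <= / t * inner s s).
  { unfold Rdiv. rewrite Rmult_comm. apply Rmult_le_compat_l; auto.
    left; apply Rinv_0_lt_compat; auto. }
  replace (1 ^ 2 * resid L f f + 2 * 1 * 1 * resid L f s + 1 ^ 2 * resid L s s - resid L f f)
    with (2 * resid L f s + resid L s s) by ring.
  eapply Rle_trans; [apply Rabs_triang|].
  rewrite Rabs_mult, (Rabs_pos_eq 2), (Rabs_pos_eq (resid L s s)) by lra. lra.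
Qed.

End Residual.

(** * Charlier polynomials and the correlation [rho] *)

Definition rpoly (lam : R) (P : list R) : R -> R := fun x => horner P (reldev lam x).

(* The Charlier polynomials of Poisson(lam) of degree 0, 1, 2, scaled by lam^-k;
   note [lam ^ 2 * cpoly2 lam x = x ^ 2 - (2 * lam + 1) * x + lam ^ 2]. *)
Definition cpoly0 (lam : R) : R -> R := rpoly lam [1].
Definition cpoly1 (lam : R) : R -> R := rpoly lam [0; 1].
Definition cpoly2 (lam : R) : R -> R := rpoly lam [- / lam; - / lam; 1].

Section Charlier.

Variable lam : R.
Hypothesis Hlam : 0 < lam.
Let Hlam0 : 0 <= lam := Rlt_le _ _ Hlam.

Lemma poly_bounded_rpoly P : poly_bounded (rpoly lam P).
Proof. apply poly_bounded_horner, poly_bounded_reldev. Qed.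

Lemma poly_bounded_cpoly0 : poly_bounded (cpoly0 lam).
Proof. apply poly_bounded_rpoly. Qed.

Lemma poly_bounded_cpoly1 : poly_bounded (cpoly1 lam).
Proof. apply poly_bounded_rpoly. Qed.

Lemma poly_bounded_cpoly2 : poly_bounded (cpoly2 lam).
Proof. apply poly_bounded_rpoly. Qed.

#[local] Hint Resolve poly_bounded_cpoly0 poly_bounded_cpoly1 poly_bounded_cpoly2 : core.

Lemma inner_rpoly P Q : (length (poly_mul P Q) <= 9)%nat ->
  inner lam (rpoly lam P) (rpoly lam Q) = moment_sum (reldev_moment (/ lam)) 0 (poly_mul P Q).
Proof.
  intros HPQ. unfold inner, rpoly.
  rewrite (pois_E_ext lam _ (fun x => horner (poly_mul P Q) (reldev lam x)))
    by (intros; rewrite horner_mul; reflexivity).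
  rewrite pois_E_horner by (try lra; apply poly_bounded_reldev).
  apply moment_sum_ext. intros j Hj. apply pois_E_reldev_pow; auto. lia.
Qed.

Ltac inner_rpoly_compute :=
  unfold cpoly0, cpoly1, cpoly2;
  rewrite inner_rpoly by (simpl; lia); simpl; field; lra.

Lemma inner_cpoly0_cpoly0 : inner lam (cpoly0 lam) (cpoly0 lam) = 1.
Proof. inner_rpoly_compute. Qed.

Lemma inner_cpoly1_cpoly0 : inner lam (cpoly1 lam) (cpoly0 lam) = 0.
Proof. inner_rpoly_compute. Qed.

Lemma inner_cpoly1_cpoly1 : inner lam (cpoly1 lam) (cpoly1 lam) = / lam.
Proof. inner_rpoly_compute. Qed.

Lemma inner_cpoly2_cpoly0 : inner lam (cpoly2 lam) (cpoly0 lam) = 0.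
Proof. inner_rpoly_compute. Qed.

Lemma inner_cpoly2_cpoly1 : inner lam (cpoly2 lam) (cpoly1 lam) = 0.
Proof. inner_rpoly_compute. Qed.

Lemma inner_cpoly2_cpoly2 : inner lam (cpoly2 lam) (cpoly2 lam) = 2 * (/ lam) ^ 2.
Proof. inner_rpoly_compute. Qed.

Lemma cpoly_orthogonal : orthogonal lam [cpoly2 lam; cpoly1 lam; cpoly0 lam].
Proof.
  repeat split; repeat constructor; try apply poly_bounded_rpoly;
    auto using inner_cpoly2_cpoly1, inner_cpoly2_cpoly0, inner_cpoly1_cpoly0.
Qed.

Lemma cpoly_orthogonal_tail : orthogonal lam [cpoly1 lam; cpoly0 lam].
Proof. apply cpoly_orthogonal. Qed.

Lemma cpoly0_orthogonal : orthogonal lam [cpoly0 lam].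
Proof. apply cpoly_orthogonal_tail. Qed.

Lemma pois_cov_resid f k : pois_cov lam f k = resid lam [cpoly0 lam] f k.
Proof.
  unfold pois_cov. simpl. rewrite inner_cpoly0_cpoly0.
  assert (HE : forall g, inner lam g (cpoly0 lam) = pois_E lam g)
    by (intros; apply pois_E_ext; intros; unfold cpoly0, rpoly; simpl; ring).
  rewrite !HE. unfold inner at 1. field.
Qed.

Lemma resid_cpoly0_r f : poly_bounded f -> resid lam [cpoly0 lam] f (cpoly0 lam) = 0.
Proof.
  intros Hf. rewrite resid_sym. apply resid_self_l; [constructor|].
  rewrite inner_cpoly0_cpoly0. lra.
Qed.

Lemma r_coef_inner_cpoly1 h : poly_bounded h -> r_coef h lam = inner lam h (cpoly1 lam).
Proof.
  intros Hh. unfold r_coef. rewrite pois_cov_resid.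
  rewrite (resid_ext lam [cpoly0 lam] h h (fun x => x)
             (fun x => lam * cpoly1 lam x + lam * cpoly0 lam x))
    by (intros; unfold cpoly1, cpoly0, rpoly, reldev; cbn [horner]; field; lra).
  rewrite resid_lin_r, resid_cpoly0_r
    by auto using cpoly0_orthogonal.
  simpl. rewrite inner_cpoly1_cpoly0, inner_cpoly0_cpoly0. field. lra.
Qed.

Lemma resid_cpoly0_sub_r_coef h k : poly_bounded h -> poly_bounded k ->
  resid lam [cpoly0 lam] (fun x => h x - r_coef h lam * x) k
  = resid lam [cpoly0 lam] (fun x => h x - proj_coef lam (cpoly1 lam) h * cpoly1 lam x) k.
Proof.
  intros Hh Hk. set (c := proj_coef lam (cpoly1 lam) h).
  assert (Hh1 : poly_bounded (fun x => h x - c * cpoly1 lam x))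
    by (apply poly_bounded_minus, poly_bounded_scal; auto).
  rewrite (resid_ext lam _ _ (fun x => 1 * (h x - c * cpoly1 lam x) + (- c) * cpoly0 lam x) k k).
  - rewrite resid_lin_l, (resid_sym _ _ (cpoly0 lam) k), resid_cpoly0_r
      by auto using cpoly0_orthogonal.
    ring.
  - intros n. unfold c, proj_coef. rewrite r_coef_inner_cpoly1, inner_cpoly1_cpoly1 by auto.
    generalize (inner lam h (cpoly1 lam)). intros i.
    unfold cpoly1, cpoly0, rpoly, reldev. cbn [horner]. field. lra.
  - reflexivity.
Qed.

Lemma resid_cpoly0_test_fun k : poly_bounded k ->
  resid lam [cpoly0 lam] k (fun x => x ^ 2 - (2 * lam + 1) * x)
  = lam ^ 2 * resid lam [cpoly0 lam] k (cpoly2 lam).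
Proof.
  intros Hk.
  rewrite (resid_ext lam _ k k _ (fun x => lam ^ 2 * cpoly2 lam x + (- lam ^ 2) * cpoly0 lam x))
    by (intros; unfold cpoly2, cpoly0, rpoly, reldev; cbn [horner]; field; lra).
  rewrite resid_lin_r, resid_cpoly0_r by auto using cpoly0_orthogonal. ring.
Qed.

Lemma resid_cpoly10_cpoly2 f : poly_bounded f ->
  resid lam [cpoly1 lam; cpoly0 lam] f (cpoly2 lam)
  = resid lam [cpoly0 lam] (fun x => f x - proj_coef lam (cpoly1 lam) f * cpoly1 lam x)
      (cpoly2 lam).
Proof.
  intros Hf. rewrite resid_cons_proj by auto using cpoly_orthogonal_tail.
  apply resid_ext; [reflexivity|]. intros n.
  unfold proj_coef. rewrite inner_cpoly2_cpoly1. unfold Rdiv. ring.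
Qed.

Lemma rho_partial_corr h : poly_bounded h ->
  rho h lam = resid lam [cpoly1 lam; cpoly0 lam] h (cpoly2 lam)
              / sqrt (resid lam [cpoly1 lam; cpoly0 lam] h h
                      * resid lam [cpoly1 lam; cpoly0 lam] (cpoly2 lam) (cpoly2 lam)).
Proof.
  intros Hh.
  assert (H10 := cpoly_orthogonal_tail).
  assert (Hh1 : poly_bounded (fun x => h x - proj_coef lam (cpoly1 lam) h * cpoly1 lam x))
    by (apply poly_bounded_minus, poly_bounded_scal; auto).
  assert (Hr : poly_bounded (fun x => h x - r_coef h lam * x))
    by (apply poly_bounded_minus, poly_bounded_scal; auto; apply poly_bounded_id).
  assert (HP : poly_bounded (fun x => x ^ 2 - (2 * lam + 1) * x))
    by (apply poly_bounded_minus; [apply poly_bounded_pow | apply poly_bounded_scal];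
        apply poly_bounded_id).
  assert (HN : resid lam [cpoly0 lam] (fun x => h x - r_coef h lam * x)
                  (fun x => x ^ 2 - (2 * lam + 1) * x)
                = lam ^ 2 * resid lam [cpoly1 lam; cpoly0 lam] h (cpoly2 lam)).
  { rewrite resid_cpoly0_test_fun, resid_cpoly0_sub_r_coef, resid_cpoly10_cpoly2 by auto.
    reflexivity. }
  assert (HV : resid lam [cpoly0 lam] (fun x => h x - r_coef h lam * x)
                  (fun x => h x - r_coef h lam * x)
                = resid lam [cpoly1 lam; cpoly0 lam] h h).
  { rewrite resid_cpoly0_sub_r_coef, resid_sym, resid_cpoly0_sub_r_coef,
      (resid_cons_proj lam Hlam0 [cpoly0 lam] (cpoly1 lam) h h) by auto.
    reflexivity. }
  assert (HW : resid lam [cpoly0 lam] (fun x => x ^ 2 - (2 * lam + 1) * x)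
                  (fun x => x ^ 2 - (2 * lam + 1) * x)
                = lam ^ 2 * (lam ^ 2
                             * resid lam [cpoly1 lam; cpoly0 lam] (cpoly2 lam) (cpoly2 lam))).
  { rewrite resid_cpoly0_test_fun, resid_sym, resid_cpoly0_test_fun,
      (resid_cons_orth_r lam [cpoly0 lam] (cpoly1 lam)) by auto using inner_cpoly2_cpoly1.
    reflexivity. }
  unfold rho, pois_corr, pois_var. rewrite !pois_cov_resid, HN, HV, HW.
  set (a := resid lam [cpoly1 lam; cpoly0 lam] h (cpoly2 lam)).
  set (q := resid lam [cpoly1 lam; cpoly0 lam] h h).
  set (z := resid lam [cpoly1 lam; cpoly0 lam] (cpoly2 lam) (cpoly2 lam)).
  replace (q * (lam ^ 2 * (lam ^ 2 * z))) with ((lam ^ 2) ^ 2 * (q * z)) by ring.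
  rewrite sqrt_mult_alt, sqrt_pow2 by (repeat apply pow_le; lra).
  unfold Rdiv. rewrite Rinv_mult.
  replace (lam ^ 2 * a * (/ lam ^ 2 * / sqrt (q * z)))
    with ((lam ^ 2 * / lam ^ 2) * a * / sqrt (q * z)) by ring.
  rewrite Rinv_r by (apply pow_nonzero; lra). ring.
Qed.

Lemma rho_affine h g A : poly_bounded g -> (forall x, h x = lam * g x + A * (x - lam)) ->
  rho h lam = lam * inner lam g (cpoly2 lam)
              / sqrt (2 * resid lam [cpoly1 lam; cpoly0 lam] g g).
Proof.
  intros Hg Hh.
  assert (H01 := cpoly_orthogonal_tail).
  assert (Hh' : forall n : nat, h (INR n) = lam * g (INR n) + (A * lam) * cpoly1 lam (INR n))
    by (intros; rewrite Hh; unfold cpoly1, rpoly, reldev; cbn [horner]; field; lra).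
  assert (Hb : poly_bounded h).
  { apply (poly_bounded_le _ (fun x => lam * g x + (A * lam) * cpoly1 lam x)).
    - intros n. rewrite Hh'. lra.
    - apply poly_bounded_plus; apply poly_bounded_scal; auto. }
  assert (H1 : forall k, resid lam [cpoly1 lam; cpoly0 lam] (cpoly1 lam) k = 0).
  { intros k. apply resid_self_l; [repeat constructor; apply inner_cpoly1_cpoly0|].
    rewrite inner_cpoly1_cpoly1. apply Rinv_neq_0_compat. lra. }
  assert (Hc2 : forall k, resid lam [cpoly1 lam; cpoly0 lam] k (cpoly2 lam)
                          = inner lam k (cpoly2 lam)).
  { intros k. rewrite resid_sym, resid_orth_l, inner_sym; auto.
    repeat constructor; auto using inner_cpoly2_cpoly1, inner_cpoly2_cpoly0. }
  rewrite rho_partial_corr by auto.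
  rewrite !(resid_ext lam _ h (fun x => lam * g x + (A * lam) * cpoly1 lam x)
              h (fun x => lam * g x + (A * lam) * cpoly1 lam x)) by auto.
  rewrite (resid_ext lam _ h (fun x => lam * g x + (A * lam) * cpoly1 lam x)
             (cpoly2 lam) (cpoly2 lam)) by auto.
  assert (Hb' : poly_bounded (fun x => lam * g x + (A * lam) * cpoly1 lam x))
    by (apply poly_bounded_plus; apply poly_bounded_scal; auto).
  rewrite !resid_lin_l, !resid_lin_r by auto.
  rewrite !H1, (resid_sym _ _ g (cpoly1 lam)), H1, !Hc2, inner_cpoly2_cpoly2.
  f_equal; [ring | f_equal; field; lra].
Qed.

End Charlier.

(** * Taylor expansion of the power divergence *)

Section TaylorFamily.

Variables (g : nat -> R -> R) (P : R -> Prop) (n : nat).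
Hypothesis HP : open P.
Hypothesis Hg : forall k t, (k <= n)%nat -> P t -> is_derive (g k) t (g (S k) t).

Lemma Derive_n_family k t : (k <= S n)%nat -> P t ->
  Derive_n (g 0%nat) k t = g k t /\ ex_derive_n (g 0) k t.
Proof.
  revert t. induction k as [|k IH]; intros t Hk Ht; [simpl; auto|].
  assert (Hloc : locally t (fun s => Derive_n (g 0%nat) k s = g k s)).
  { apply (filter_imp P); [intros s Hs; apply IH; auto; lia | apply HP; auto]. }
  split; simpl.
  - rewrite (Derive_ext_loc _ (g k) t Hloc). apply is_derive_unique, Hg; auto. lia.
  - apply (ex_derive_ext_loc (g k)); [apply (filter_imp _ _ (fun s H => eq_sym H) Hloc)|].
    exists (g (S k) t). apply Hg; auto. lia.
Qed.

Lemma taylor_family_lt x y : x < y -> (forall t, x <= t <= y -> P t) ->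
  exists z, x < z < y /\
    g 0%nat y = sum_f_R0 (fun m => (y - x) ^ m / INR (Factorial.fact m) * g m x) n
            + (y - x) ^ S n / INR (Factorial.fact (S n)) * g (S n) z.
Proof.
  intros Hxy HPxy.
  destruct (Taylor_Lagrange (g 0%nat) n x y Hxy) as [z [Hz E]].
  { intros t Ht k Hk. apply Derive_n_family; auto. }
  exists z. split; auto. rewrite E. f_equal.
  - apply sum_eq. intros m Hm. f_equal. apply Derive_n_family; [lia | apply HPxy; lra].
  - f_equal. apply Derive_n_family; [lia | apply HPxy; lra].
Qed.

End TaylorFamily.

Lemma taylor_family_gt (g : nat -> R -> R) (P : R -> Prop) (n : nat) : open P ->
  (forall k t, (k <= n)%nat -> P t -> is_derive (g k) t (g (S k) t)) ->
  forall x y, y < x -> (forall t, y <= t <= x -> P t) ->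
  exists z, y < z < x /\
    g 0%nat y = sum_f_R0 (fun m => (y - x) ^ m / INR (Factorial.fact m) * g m x) n
            + (y - x) ^ S n / INR (Factorial.fact (S n)) * g (S n) z.
Proof.
  intros HP Hg x y Hyx HPxy.
  (* expand t |-> g k (2 x - t) to the right of x *)
  set (h := fun k t => (-1) ^ k * g k (2 * x - t)).
  destruct (taylor_family_lt h (fun t => P (2 * x - t)) n) with (x := x) (y := 2 * x - y)
    as [z [Hz E]].
  - apply open_comp; [|auto]. intros t _.
    apply (continuous_minus (fun _ => 2 * x) (fun t => t));
      [apply continuous_const | apply continuous_id].
  - intros k t Hk Ht. unfold h.
    replace ((-1) ^ S k * g (S k) (2 * x - t))
      with ((-1) ^ k * ((-1) * g (S k) (2 * x - t))) by (simpl; ring).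
    apply is_derive_scal, (is_derive_comp (g k) (fun t => 2 * x - t)); [apply Hg; auto|].
    auto_derive; auto; ring.
  - lra.
  - intros t Ht. apply HPxy. lra.
  - exists (2 * x - z). split; [lra|].
    unfold h in E. replace (2 * x - (2 * x - y)) with y in E by ring.
    replace (2 * x - x) with x in E by ring.
    replace (2 * x - y - x) with ((-1) * (y - x)) in E by ring.
    rewrite pow_O, Rmult_1_l in E. rewrite E.
    assert (Hsq : forall m w, ((-1) * (y - x)) ^ m * ((-1) ^ m * w) = (y - x) ^ m * w).
    { intros m w. rewrite Rpow_mult_distr.
      replace ((-1) ^ m * (y - x) ^ m * ((-1) ^ m * w))
        with (((-1) * (-1)) ^ m * ((y - x) ^ m * w)) by (rewrite Rpow_mult_distr; ring).
      replace ((-1) * (-1)) with 1 by ring. rewrite pow1. ring. }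
    f_equal.
    + apply sum_eq. intros m _. unfold Rdiv.
      rewrite Rmult_assoc, (Rmult_comm (/ _)), <- Rmult_assoc, Hsq. ring.
    + unfold Rdiv. rewrite Rmult_assoc, (Rmult_comm (/ _)), <- Rmult_assoc, Hsq. ring.
Qed.

Lemma taylor_family (g : nat -> R -> R) (P : R -> Prop) (n : nat) : open P ->
  (forall k t, (k <= n)%nat -> P t -> is_derive (g k) t (g (S k) t)) ->
  forall x y, (forall t, Rmin x y <= t <= Rmax x y -> P t) ->
  exists z, Rmin x y <= z <= Rmax x y /\
    g 0%nat y = sum_f_R0 (fun m => (y - x) ^ m / INR (Factorial.fact m) * g m x) n
            + (y - x) ^ S n / INR (Factorial.fact (S n)) * g (S n) z.
Proof.
  intros HP Hg x y HPxy. destruct (Rtotal_order x y) as [Hlt|[<-|Hgt]].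
  - rewrite Rmin_left, Rmax_right in * by lra.
    destruct (taylor_family_lt g P n HP Hg x y Hlt) as [z [Hz E]]; auto.
    exists z. split; [lra | exact E].
  - exists x. rewrite Rmin_left, Rmax_left by lra. split; [lra|].
    rewrite Rminus_diag, pow_i, Rdiv_0_l, Rmult_0_l, Rplus_0_r by lia.
    clear HP Hg HPxy. induction n as [|m IH]; simpl.
    + unfold Rdiv. rewrite Rinv_1. ring.
    + rewrite <- IH. unfold Rdiv. ring.
  - rewrite Rmin_right, Rmax_left in * by lra.
    destruct (taylor_family_gt g P n HP Hg x y Hgt) as [z [Hz E]]; auto.
    exists z. split; [lra | exact E].
Qed.

(* Written with [t * Rpower t d] rather than [Rpower t (d + 1)], which is 1 at
   t = 0 since [ln 0 = 0]. *)
Definition cressie_read (d t : R) : R :=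
  if Req_EM_T d 0 then 2 * (t * ln t - (t - 1))
  else 2 / (d * (d + 1)) * (t * Rpower t d - 1 - (d + 1) * (t - 1)).

Lemma psi_eq_cressie_read d lam x : -1 < d -> 0 < lam ->
  psi d lam x = lam * cressie_read d (x / lam) + 2 / (d + 1) * (x - lam).
Proof.
  intros Hd Hl. unfold psi, cressie_read.
  destruct (Req_EM_T d 0) as [->|Hn]; field; [lra | split; lra].
Qed.

Fixpoint falling (r : R) (k : nat) : R :=
  match k with O => 1 | S k => falling r k * (r - INR k) end.

(* The derivatives of [cressie_read d] on (0, +oo), where the k = 0 entry agrees with it. *)
Definition cressie_read_deriv (d : R) (k : nat) (t : R) : R :=
  match k with
  | O => if Req_EM_T d 0 then 2 * (t * ln t - (t - 1))
         else 2 / (d * (d + 1)) * (Rpower t (d + 1) - 1 - (d + 1) * (t - 1))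
  | 1%nat => if Req_EM_T d 0 then 2 * ln t else 2 / d * (Rpower t d - 1)
  | S (S j) => 2 * falling (d - 1) j * Rpower t (d - 1 - INR j)
  end.

Lemma is_derive_Rpower t q : 0 < t -> is_derive (fun s => Rpower s q) t (q * Rpower t (q - 1)).
Proof. intros. apply is_derive_Reals, derivable_pt_lim_power; auto. Qed.

Lemma cressie_read_deriv_spec d k t : -1 < d -> 0 < t ->
  is_derive (cressie_read_deriv d k) t (cressie_read_deriv d (S k) t).
Proof.
  intros Hd Ht.
  assert (HD : forall q, Derive (fun s => Rpower s q) t = q * Rpower t (q - 1))
    by (intros; apply is_derive_unique, is_derive_Rpower; auto).
  assert (HE : forall q, ex_derive (fun s => Rpower s q) t)
    by (intros; eexists; apply is_derive_Rpower; auto).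
  destruct k as [|[|j]]; unfold cressie_read_deriv.
  - destruct (Req_EM_T d 0) as [->|Hn]; auto_derive; auto.
    + field. lra.
    + rewrite HD. replace (d + 1 - 1) with d by ring. field. split; lra.
  - destruct (Req_EM_T d 0) as [->|Hn]; simpl falling; rewrite INR_0; auto_derive; auto.
    + replace (0 - 1 - 0) with (- (1)) by ring. rewrite Rpower_Ropp, Rpower_1 by auto. field. lra.
    + rewrite HD. replace (d - 1 - 0) with (d - 1) by ring. field. auto.
  - simpl falling. rewrite S_INR. auto_derive; auto.
    rewrite HD. replace (d - 1 - INR j - 1) with (d - 1 - (INR j + 1)) by ring. ring.
Qed.

Lemma Rpower_1_base q : Rpower 1 q = 1.
Proof. unfold Rpower. rewrite ln_1, Rmult_0_r. apply exp_0. Qed.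

Lemma cressie_read_taylor d u : -1 < d -> -1 < u ->
  exists z, Rmin 1 (1 + u) <= z <= Rmax 1 (1 + u) /\
    cressie_read d (1 + u)
    = horner [0; 0; 1; (d - 1) / 3; (d - 1) * (d - 2) / 12] u
      + u ^ 5 / 60 * ((d - 1) * (d - 2) * (d - 3)) * Rpower z (d - 4).
Proof.
  intros Hd Hu.
  destruct (taylor_family (cressie_read_deriv d) (fun t => 0 < t) 4 (open_gt 0))
    with (x := 1) (y := 1 + u) as [z [Hz E]].
  { intros k t _ Ht. apply cressie_read_deriv_spec; auto. }
  { intros t Ht. assert (0 < Rmin 1 (1 + u)) by (apply Rmin_glb_lt; lra). lra. }
  exists z. split; auto.
  replace (cressie_read d (1 + u)) with (cressie_read_deriv d 0 (1 + u)).
  2:{ unfold cressie_read, cressie_read_deriv. destruct (Req_EM_T d 0); auto.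
      rewrite Rpower_plus, Rpower_1 by lra. ring. }
  rewrite E. replace (1 + u - 1) with u by ring.
  assert (D01 : cressie_read_deriv d 0 1 = 0 /\ cressie_read_deriv d 1 1 = 0).
  { unfold cressie_read_deriv. rewrite !Rpower_1_base, ln_1.
    destruct (Req_EM_T d 0); split; ring. }
  assert (Dk : forall j t, cressie_read_deriv d (S (S j)) t
                          = 2 * falling (d - 1) j * Rpower t (d - 1 - INR j)) by reflexivity.
  cbn [sum_f_R0]. rewrite (proj1 D01), (proj2 D01), !Dk, !Rpower_1_base.
  replace (d - 1 - INR 3) with (d - 4) by (simpl; ring).
  simpl. field.
Qed.

Lemma Rpower_le_bounds z q lo hi M : 0 < lo <= z -> z <= hi -> 1 <= hi -> q <= INR M ->
  Rpower z q <= Rpower lo q + hi ^ M.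
Proof.
  intros Hz Hh H1 HM.
  assert (Hlo : 0 < Rpower lo q) by apply exp_pos.
  destruct (Rle_dec 0 q) as [Hq|Hq].
  - assert (Rpower z q <= Rpower hi q) by (apply Rle_Rpower_l; auto; lra).
    assert (Rpower hi q <= Rpower hi (INR M)) by (apply Rle_Rpower; auto).
    rewrite Rpower_pow in H0 by lra. lra.
  - assert (Rpower z q <= Rpower lo q).
    { rewrite <- (Rinv_inv (Rpower z q)), <- (Rinv_inv (Rpower lo q)).
      rewrite <- (Rpower_Ropp z q), <- (Rpower_Ropp lo q).
      apply Rinv_le_contravar; [apply exp_pos|]. apply Rle_Rpower_l; lra. }
    assert (0 <= hi ^ M) by (apply pow_le; lra). lra.
Qed.

Lemma ln_le_0 t : 0 < t <= 1 -> ln t <= 0.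
Proof. intros Ht. rewrite <- ln_1. apply ln_le; lra. Qed.

Lemma xlnx_abs_le t : 0 <= t <= 1 -> Rabs (t * ln t) <= 1.
Proof.
  intros Ht. destruct (Req_dec t 0) as [->|Ht0]; [rewrite Rmult_0_l, Rabs_R0; lra|].
  assert (H1 := ln_le_0 t ltac:(lra)).
  (* ln (1/t) <= 1/t - 1 gives - t ln t <= 1 - t *)
  assert (H2 : ln (/ t) <= / t - 1).
  { pose proof (exp_ineq1_le (ln (/ t))). rewrite exp_ln in H by (apply Rinv_0_lt_compat; lra).
    lra. }
  rewrite ln_Rinv in H2 by lra.
  assert (t * (- ln t) <= t * (/ t - 1)) by (apply Rmult_le_compat_l; lra).
  replace (t * (/ t - 1)) with (1 - t) in H by (field; lra).
  rewrite Rabs_left1 by nra. lra.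
Qed.

Lemma cressie_read_bounded d : -1 < d ->
  exists B, forall t, 0 <= t <= 1 -> Rabs (cressie_read d t) <= B.
Proof.
  intros Hd. unfold cressie_read. destruct (Req_EM_T d 0) as [->|Hn].
  - exists 4. intros t Ht. pose proof (xlnx_abs_le t Ht).
    rewrite Rabs_mult, Rabs_pos_eq by lra.
    assert (Rabs (t * ln t - (t - 1)) <= 2).
    { unfold Rminus at 1. eapply Rle_trans; [apply Rabs_triang|].
      rewrite Rabs_Ropp, (Rabs_left1 (t - 1)); lra. }
    lra.
  - exists (Rabs (2 / (d * (d + 1))) * (2 + Rabs (d + 1))). intros t Ht.
    assert (Htd : Rabs (t * Rpower t d) <= 1).
    { destruct (Req_dec t 0) as [->|Ht0]; [rewrite Rmult_0_l, Rabs_R0; lra|].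
      replace (t * Rpower t d) with (Rpower t (d + 1))
        by (rewrite Rpower_plus, Rpower_1 by lra; ring).
      rewrite Rabs_pos_eq by (left; apply exp_pos).
      apply Rle_trans with (Rpower 1 (d + 1));
        [apply Rle_Rpower_l; lra | rewrite Rpower_1_base; lra]. }
    rewrite Rabs_mult. apply Rmult_le_compat_l; [apply Rabs_pos|].
    unfold Rminus. eapply Rle_trans; [apply Rabs_triang|].
    rewrite Rabs_Ropp, Rabs_mult.
    assert (Rabs (t + - (1)) <= 1) by (apply Rabs_le; lra).
    assert (Rabs (d + 1) * Rabs (t + - (1)) <= Rabs (d + 1) * 1)
      by (apply Rmult_le_compat_l; auto using Rabs_pos).
    assert (Rabs (t * Rpower t d + - (1)) <= 2).
    { eapply Rle_trans; [apply Rabs_triang|]. rewrite Rabs_Ropp, Rabs_R1. lra. }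
    lra.
Qed.

Lemma cressie_read_remainder_near d M u : -1 < d -> d - 4 <= INR M -> - / 2 <= u ->
  Rabs (cressie_read d (1 + u) - horner [0; 0; 1; (d - 1) / 3; (d - 1) * (d - 2) / 12] u)
  <= Rabs ((d - 1) * (d - 2) * (d - 3)) / 60 * (Rpower (/ 2) (d - 4) + 1)
     * Rabs u ^ 5 * (1 + Rabs u) ^ M.
Proof.
  intros Hd HM Hu. generalize (Rabs_pos u). intros Hu0.
  destruct (cressie_read_taylor d u Hd ltac:(lra)) as [z [Hz E]].
  rewrite E. match goal with |- Rabs (?q + ?r - ?q) <= _ => replace (q + r - q) with r by ring end.
  assert (Hz1 : / 2 <= z) by (eapply Rle_trans; [|apply Hz]; apply Rmin_glb; lra).
  assert (Hz2 : z <= 1 + Rabs u)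
    by (eapply Rle_trans; [apply Hz|]; apply Rmax_lub; generalize (Rle_abs u); lra).
  assert (Hpow : 0 < Rpower (/ 2) (d - 4)) by apply exp_pos.
  assert (HM1 : 1 <= (1 + Rabs u) ^ M) by (apply pow_R1_Rle; lra).
  assert (Hr : Rpower z (d - 4) <= (Rpower (/ 2) (d - 4) + 1) * (1 + Rabs u) ^ M).
  { eapply Rle_trans; [apply (Rpower_le_bounds z (d - 4) (/ 2) (1 + Rabs u) M); lra|]. nra. }
  set (c := (d - 1) * (d - 2) * (d - 3)).
  rewrite !Rabs_mult, Rabs_div, <- RPow_abs, (Rabs_pos_eq (Rpower z (d - 4))), (Rabs_pos_eq 60)
    by (try left; try apply exp_pos; lra).
  replace (Rabs c / 60 * (Rpower (/ 2) (d - 4) + 1) * Rabs u ^ 5 * (1 + Rabs u) ^ M)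
    with (Rabs u ^ 5 / 60 * Rabs c * ((Rpower (/ 2) (d - 4) + 1) * (1 + Rabs u) ^ M))
    by (unfold Rdiv; ring).
  apply Rmult_le_compat_l; auto.
  apply Rmult_le_pos; [apply Rmult_le_pos; [apply pow_le|]|apply Rabs_pos]; lra.
Qed.

Lemma cressie_read_remainder_far d : -1 < d -> exists K, forall u, -1 <= u <= - / 2 ->
  Rabs (cressie_read d (1 + u) - horner [0; 0; 1; (d - 1) / 3; (d - 1) * (d - 2) / 12] u)
  <= K * Rabs u ^ 5.
Proof.
  intros Hd. destruct (cressie_read_bounded d Hd) as [B HB].
  set (p := [0; 0; 1; (d - 1) / 3; (d - 1) * (d - 2) / 12]).
  exists (32 * (Rabs B + coef_abs_sum p)). intros u Hu.
  assert (Hau : / 2 <= Rabs u <= 1) by (rewrite Rabs_left1; lra).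
  assert (H32 : 1 <= 32 * Rabs u ^ 5).
  { assert ((/ 2) ^ 5 <= Rabs u ^ 5) by (apply pow_incr; lra). simpl in H |- *. lra. }
  assert (HS := coef_abs_sum_nonneg p). assert (HB0 := Rabs_pos B).
  unfold Rminus. eapply Rle_trans; [apply Rabs_triang|]. rewrite Rabs_Ropp.
  assert (Rabs (cressie_read d (1 + u)) <= Rabs B)
    by (eapply Rle_trans; [apply HB; lra | apply Rle_abs]).
  assert (Rabs (horner p u) <= coef_abs_sum p) by (apply horner_abs_le; lra).
  nra.
Qed.

Lemma cressie_read_remainder d : -1 < d -> exists K M, forall u, -1 <= u ->
  Rabs (cressie_read d (1 + u) - horner [0; 0; 1; (d - 1) / 3; (d - 1) * (d - 2) / 12] u)
  <= K * Rabs u ^ 5 * (1 + Rabs u) ^ M.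
Proof.
  intros Hd. destruct (INR_unbounded (d - 4)) as [M HM].
  destruct (cressie_read_remainder_far d Hd) as [K2 HK2].
  set (K1 := Rabs ((d - 1) * (d - 2) * (d - 3)) / 60 * (Rpower (/ 2) (d - 4) + 1)).
  exists (Rabs K1 + Rabs K2), M. intros u Hu.
  assert (Hu5 : 0 <= Rabs u ^ 5) by (apply pow_le, Rabs_pos).
  assert (HM1 : 1 <= (1 + Rabs u) ^ M) by (apply pow_R1_Rle; generalize (Rabs_pos u); lra).
  generalize (Rle_abs K1) (Rle_abs K2) (Rabs_pos K1) (Rabs_pos K2). intros.
  destruct (Rle_dec (- / 2) u) as [Hnear|Hfar].
  - eapply Rle_trans; [apply (cressie_read_remainder_near d M u); lra|]. fold K1.
    apply Rmult_le_compat_r; [lra|]. apply Rmult_le_compat_r; lra.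
  - eapply Rle_trans; [apply HK2; lra|].
    assert (Rabs u ^ 5 <= Rabs u ^ 5 * (1 + Rabs u) ^ M) by nra.
    rewrite Rmult_assoc. apply Rle_trans with (Rabs K2 * Rabs u ^ 5).
    + apply Rmult_le_compat_r; lra.
    + apply Rmult_le_compat; lra.
Qed.

(** * Asymptotics of [rho] *)

Section Quartic.

Variables (a b lam : R).
Hypothesis Hlam : 0 < lam.

Let p := rpoly lam [0; 0; 1; a; b].

Lemma inner_quartic_cpoly2 :
  inner lam p (cpoly2 lam)
  = 2 * (/ lam) ^ 2 + (/ lam) ^ 3 * horner [6 * a + 12 * b; 14 * b] (/ lam).
Proof. unfold p, cpoly2. rewrite inner_rpoly by (try lra; simpl; lia). simpl. field. lra. Qed.

Lemma resid_deg1_quartic :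
  resid lam [cpoly1 lam; cpoly0 lam] p p
  = 2 * (/ lam) ^ 2 + (/ lam) ^ 3 * horner [12 * a + 6 * a ^ 2 + 24 * b;
      18 * a ^ 2 + 28 * b + 144 * a * b + 96 * b ^ 2; 84 * a * b + 384 * b ^ 2; 98 * b ^ 2] (/ lam).
Proof.
  simpl resid. unfold p, cpoly1, cpoly0. rewrite !inner_rpoly by (try lra; simpl; lia).
  simpl. field. lra.
Qed.

Lemma resid_deg2_quartic :
  resid lam [cpoly2 lam; cpoly1 lam; cpoly0 lam] p p
  = 6 * a ^ 2 * (/ lam) ^ 3 + (/ lam) ^ 4 * horner [72 * a * b + 24 * b ^ 2; 216 * b ^ 2] (/ lam).
Proof.
  simpl resid. unfold p, cpoly2, cpoly1, cpoly0. rewrite !inner_rpoly by (try lra; simpl; lia).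
  simpl. field. lra.
Qed.

End Quartic.

Lemma reldev_nat_ge lam k : 0 < lam -> -1 <= reldev lam (INR k).
Proof.
  intros Hl. unfold reldev. apply (Rmult_le_reg_r lam); auto.
  unfold Rdiv. rewrite Rmult_assoc, Rinv_l by lra. generalize (pos_INR k). lra.
Qed.

Lemma perturbation_bound x m r0 r h sh c j : 0 < x <= 1 -> 0 <= m -> 0 <= c -> (j <= 3)%nat ->
  r0 = m * x ^ j + x ^ S j * h -> Rabs h <= sh -> Rabs (r - r0) <= x * r0 + c * x ^ 4 ->
  Rabs (r - m * x ^ j) <= (m + 2 * sh + c) * x ^ S j.
Proof.
  intros Hx Hm Hc Hj E Hh Hr.
  assert (Hxj : 0 < x ^ S j) by (apply pow_lt; lra).
  assert (H4 : x ^ 4 <= x ^ S j).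
  { replace 4%nat with (S j + (3 - j))%nat by lia. rewrite pow_add.
    assert (x ^ (3 - j) <= 1) by (rewrite <- (pow1 (3 - j)); apply pow_incr; lra). nra. }
  assert (Hxh : x * (x ^ S j * h) <= sh * x ^ S j).
  { assert (x * Rabs h <= sh) by (assert (0 <= Rabs h) by apply Rabs_pos; nra).
    apply Rle_trans with (x * x ^ S j * Rabs h); [|nra].
    replace (x * (x ^ S j * h)) with (x * x ^ S j * h) by ring.
    apply Rmult_le_compat_l; [nra | apply Rle_abs]. }
  assert (Hh' : Rabs (x ^ S j * h) <= sh * x ^ S j)
    by (rewrite Rabs_mult, Rabs_pos_eq by lra; nra).
  replace (r - m * x ^ j) with ((r - r0) + x ^ S j * h) by (rewrite E; ring).
  eapply Rle_trans; [apply Rabs_triang|].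
  replace (x * r0) with (m * x ^ S j + x * (x ^ S j * h)) in Hr by (rewrite E; simpl; ring).
  nra.
Qed.

Lemma ratio_estimate x Q T beta Cq Ct : 0 < x -> 0 <= Cq -> 0 <= Ct -> Cq * x <= 1 ->
  Rabs (Q - 2 * x ^ 2) <= Cq * x ^ 3 -> Rabs (T - 2 * beta * x ^ 3) <= Ct * x ^ 4 ->
  Rabs (T / Q - beta * x) <= (Ct + Rabs beta * Cq) * x ^ 2.
Proof.
  intros Hx HCq0 HCt0 HCq HQ HT.
  assert (Hx2 : 0 < x ^ 2) by (apply pow_lt; lra).
  assert (HQx : x ^ 2 <= Q).
  { apply Rabs_le_between in HQ. replace (Cq * x ^ 3) with (Cq * x * x ^ 2) in HQ by ring. nra. }
  replace (T / Q - beta * x) with (((T - 2 * beta * x ^ 3) + - (beta * x * (Q - 2 * x ^ 2))) / Q)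
    by (field; lra).
  rewrite Rabs_div, (Rabs_pos_eq Q) by lra. apply Rle_div_l; [lra|].
  eapply Rle_trans; [apply Rabs_triang|]. rewrite Rabs_Ropp, !Rabs_mult, (Rabs_pos_eq x) by lra.
  assert (Rabs beta * x * Rabs (Q - 2 * x ^ 2) <= Rabs beta * x * (Cq * x ^ 3))
    by (apply Rmult_le_compat_l; [apply Rmult_le_pos; [apply Rabs_pos|]|]; lra).
  assert (0 <= Ct + Rabs beta * Cq) by (generalize (Rabs_pos beta); nra).
  replace ((Ct + Rabs beta * Cq) * x ^ 2 * Q)
    with ((Ct + Rabs beta * Cq) * x ^ 2 * x ^ 2
          + (Ct + Rabs beta * Cq) * x ^ 2 * (Q - x ^ 2)) by ring.
  assert (0 <= (Ct + Rabs beta * Cq) * x ^ 2 * (Q - x ^ 2))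
    by (apply Rmult_le_pos; [apply Rmult_le_pos|]; lra).
  simpl in *. nra.
Qed.

Lemma sqrt_one_sub_estimate r s : 0 <= r -> r ^ 2 = 1 - s -> Rabs s <= / 2 ->
  Rabs (r - (1 - s / 2)) <= s ^ 2 / 3.
Proof.
  intros Hr Hr2 Hs. apply Rabs_le_between in Hs.
  (* (r - t) (r + t) = - s^2 / 4 with t = 1 - s / 2 >= 3 / 4 *)
  assert (E : r - (1 - s / 2) = - (s ^ 2 / 4) / (r + (1 - s / 2))).
  { field_simplify_eq; [|lra]. replace (r * r) with (r ^ 2) by ring. rewrite Hr2. ring. }
  rewrite E, Rabs_div, Rabs_Ropp, !Rabs_pos_eq by nra.
  apply Rle_div_l; nra.
Qed.

Lemma corr_sq_eq x Q T e r : 0 < x -> 0 < Q -> 0 < e ->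
  T = Q - e ^ 2 / (2 * x ^ 2) -> r = e / x / sqrt (2 * Q) -> 0 <= r /\ r ^ 2 = 1 - T / Q.
Proof.
  intros Hx HQ He ET Er.
  assert (Hsq : 0 < sqrt (2 * Q)) by (apply sqrt_lt_R0; lra).
  split.
  - rewrite Er. apply Rlt_le, Rdiv_lt_0_compat; auto. apply Rdiv_lt_0_compat; lra.
  - rewrite Er, ET.
    replace ((e / x / sqrt (2 * Q)) ^ 2) with (e ^ 2 / x ^ 2 / sqrt (2 * Q) ^ 2)
      by (field; repeat split; apply Rgt_not_eq; lra).
    rewrite pow2_sqrt by lra. field. lra.
Qed.

Lemma corr_expansion x Q T e r beta Cq Ct Ce :
  0 < x -> 0 <= beta -> 0 <= Cq -> 0 <= Ct -> 0 <= Ce ->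
  (1 + Cq + Ce + 2 * (beta + Ct + beta * Cq)) * x <= 1 ->
  Rabs (Q - 2 * x ^ 2) <= Cq * x ^ 3 -> Rabs (T - 2 * beta * x ^ 3) <= Ct * x ^ 4 ->
  2 * x ^ 2 - Ce * x ^ 3 <= e -> T = Q - e ^ 2 / (2 * x ^ 2) -> r = e / x / sqrt (2 * Q) ->
  Rabs (r - (1 - beta * x / 2))
  <= ((beta + Ct + beta * Cq) ^ 2 / 3 + (Ct + beta * Cq) / 2) * x ^ 2.
Proof.
  intros Hx Hb HCq HCt HCe Hsmall HQ HT He ET Er.
  set (D := Ct + beta * Cq).
  assert (HD : 0 <= D) by (unfold D; nra).
  assert (Hx2 : 0 < x ^ 2) by (apply pow_lt; lra).
  assert (Hx3 : x ^ 3 = x * x ^ 2) by ring.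
  assert (Hsm : forall k, 0 <= k -> k <= 1 + Cq + Ce + 2 * (beta + D) -> k * x <= 1)
    by (intros k Hk0 Hk; unfold D in *; nra).
  assert (HCqx := Hsm Cq HCq ltac:(lra)).
  assert (HCex := Hsm Ce HCe ltac:(lra)).
  assert (HbDx := Hsm (2 * (beta + D)) ltac:(lra) ltac:(lra)).
  rewrite Hx3 in HQ, He.
  assert (HQx : x ^ 2 <= Q) by (apply Rabs_le_between in HQ; nra).
  assert (Hex : x ^ 2 <= e) by nra.
  assert (Hratio : Rabs (T / Q - beta * x) <= D * x ^ 2).
  { unfold D. rewrite <- (Rabs_pos_eq beta) at 2 by lra.
    apply ratio_estimate; auto; nra. }
  destruct (corr_sq_eq x Q T e r) as [Hr0 Hr2]; auto; try nra.
  assert (Hs : Rabs (T / Q) <= (beta + D) * x).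
  { assert (Hx1 : 1 * x <= 1) by (apply Hsm; lra).
    assert (D * x ^ 2 <= D * x) by (apply Rmult_le_compat_l; [|simpl]; nra).
    apply Rabs_le_between in Hratio. apply Rabs_le_between. nra. }
  assert (Hsqrt := sqrt_one_sub_estimate r (T / Q) Hr0 Hr2 ltac:(nra)).
  replace (r - (1 - beta * x / 2)) with ((r - (1 - T / Q / 2)) + - ((T / Q - beta * x) / 2))
    by (field; lra).
  eapply Rle_trans; [apply Rabs_triang|]. rewrite Rabs_Ropp, Rabs_div, (Rabs_pos_eq 2) by lra.
  assert ((T / Q) ^ 2 <= ((beta + D) * x) ^ 2)
    by (rewrite <- pow2_abs; apply pow_incr; split; [apply Rabs_pos | auto]).
  replace (beta + Ct + beta * Cq) with (beta + D) by (unfold D; ring).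
  rewrite Rpow_mult_distr in H. lra.
Qed.

Section Expansion.

Variables (F : R -> R) (a b K : R) (M : nat).
Hypothesis HF : forall u, -1 <= u ->
  Rabs (F u - horner [0; 0; 1; a; b] u) <= K * Rabs u ^ 5 * (1 + Rabs u) ^ M.

Let g lam : R -> R := fun x => F (reldev lam x).
Let p lam : R -> R := rpoly lam [0; 0; 1; a; b].
Let s lam : R -> R := fun x => g lam x - p lam x.

Lemma remainder_abs_le lam k : 0 < lam ->
  Rabs (s lam (INR k)) <= K * Rabs (reldev lam (INR k)) ^ 5 * (1 + Rabs (reldev lam (INR k))) ^ M.
Proof. intros Hl. apply HF, reldev_nat_ge; auto. Qed.

Lemma poly_bounded_remainder lam : 0 < lam -> poly_bounded (s lam).
Proof.
  intros Hl.
  apply (poly_bounded_le _ (fun x => K * Rabs (reldev lam x) ^ 5 * (1 + Rabs (reldev lam x)) ^ M)).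
  - intros k. eapply Rle_trans; [apply remainder_abs_le; auto | apply Rle_abs].
  - apply poly_bounded_mult; [apply poly_bounded_scal|]; apply poly_bounded_pow;
      [|apply poly_bounded_plus; [apply poly_bounded_const|]];
      apply poly_bounded_abs, poly_bounded_reldev.
Qed.

Lemma poly_bounded_comp_reldev lam : 0 < lam -> poly_bounded (g lam).
Proof.
  intros Hl. apply (poly_bounded_le _ (fun x => p lam x + s lam x)).
  - intros k. right. unfold s. f_equal. ring.
  - apply poly_bounded_plus; [apply poly_bounded_rpoly | apply poly_bounded_remainder; auto].
Qed.

Lemma inner_remainder_le : exists c, 0 <= c /\ forall lam, 1 <= lam ->
  inner lam (s lam) (s lam) <= c * (/ lam) ^ 5.
Proof.
  destruct (pois_E_reldev_weighted_le 5 M) as [c [Hc H]].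
  exists (K ^ 2 * c). split; [apply Rmult_le_pos; nra|]. intros lam Hl.
  eapply Rle_trans; [apply (pois_E_le lam ltac:(lra) _
    (fun x => K ^ 2 * (reldev lam x ^ (2 * 5) * (1 + Rabs (reldev lam x)) ^ (2 * M))))|].
  - apply poly_bounded_mult; apply poly_bounded_remainder; lra.
  - apply poly_bounded_scal, poly_bounded_mult; apply poly_bounded_pow;
      [apply poly_bounded_reldev | apply poly_bounded_plus;
        [apply poly_bounded_const | apply poly_bounded_abs, poly_bounded_reldev]].
  - intros k. assert (Hk := remainder_abs_le lam k ltac:(lra)).
    set (u := reldev lam (INR k)) in *. set (r := s lam (INR k)) in *.
    replace (2 * M)%nat with (M + M)%nat by lia. rewrite pow_add.
    replace (u ^ (2 * 5)) with (Rabs u ^ 5 * Rabs u ^ 5)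
      by (rewrite <- Rpow_mult_distr, <- Rabs_mult, Rabs_pos_eq; simpl; nra).
    assert (0 <= Rabs u ^ 5) by (apply pow_le, Rabs_pos).
    assert (0 <= (1 + Rabs u) ^ M) by (apply pow_le; generalize (Rabs_pos u); lra).
    replace (r * r) with (Rabs r * Rabs r) by (rewrite <- Rabs_mult; apply Rabs_pos_eq; nra).
    replace (K ^ 2 * (Rabs u ^ 5 * Rabs u ^ 5 * ((1 + Rabs u) ^ M * (1 + Rabs u) ^ M)))
      with ((K * Rabs u ^ 5 * (1 + Rabs u) ^ M) * (K * Rabs u ^ 5 * (1 + Rabs u) ^ M)) by ring.
    apply Rmult_le_compat; auto using Rabs_pos.
  - rewrite pois_E_scal, Rmult_assoc. apply Rmult_le_compat_l; [nra|]. apply H; auto.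
Qed.

Lemma quartic_plus_remainder lam n : g lam (INR n) = p lam (INR n) + s lam (INR n).
Proof. unfold s. ring. Qed.

Lemma resid_remainder_perturb : exists c, 0 <= c /\ forall lam, 1 <= lam ->
  forall L, orthogonal lam L ->
  Rabs (resid lam L (g lam) (g lam) - resid lam L (p lam) (p lam))
  <= / lam * resid lam L (p lam) (p lam) + c * (/ lam) ^ 4.
Proof.
  destruct inner_remainder_le as [c [Hc Hs]]. exists (2 * c). split; [lra|].
  intros lam Hl L HL. destruct (inv_le_1 lam Hl) as [Hx0 Hx1].
  rewrite (resid_ext lam L _ (fun x => p lam x + s lam x) _ (fun x => p lam x + s lam x))
    by apply quartic_plus_remainder.
  eapply Rle_trans; [apply (resid_perturb lam ltac:(lra) L (p lam) (s lam) (/ lam)); auto;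
    [apply poly_bounded_rpoly | apply poly_bounded_remainder; lra]|].
  apply Rplus_le_compat_l. rewrite Rinv_inv.
  assert (H5 := Hs lam Hl).
  assert (0 <= inner lam (s lam) (s lam))
    by (apply inner_self_nonneg; [lra | apply poly_bounded_remainder; lra]).
  apply Rle_trans with ((1 + lam) * (c * (/ lam) ^ 5)); [apply Rmult_le_compat_l; lra|].
  replace ((1 + lam) * (c * (/ lam) ^ 5)) with (c * (/ lam) ^ 4 * (/ lam + 1))
    by (field; lra).
  replace (2 * c * (/ lam) ^ 4) with (c * (/ lam) ^ 4 * 2) by ring.
  apply Rmult_le_compat_l; [apply Rmult_le_pos; [|apply pow_le]|]; lra.
Qed.

Lemma resid_deg1_estimate : exists C, forall lam, 1 <= lam ->
  Rabs (resid lam [cpoly1 lam; cpoly0 lam] (g lam) (g lam) - 2 * (/ lam) ^ 2) <= C * (/ lam) ^ 3.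
Proof.
  destruct resid_remainder_perturb as [c [Hc H]].
  set (l := [12 * a + 6 * a ^ 2 + 24 * b; 18 * a ^ 2 + 28 * b + 144 * a * b + 96 * b ^ 2;
             84 * a * b + 384 * b ^ 2; 98 * b ^ 2]).
  exists (2 + 2 * coef_abs_sum l + c). intros lam Hl. assert (Hx := inv_le_1 lam Hl).
  apply (perturbation_bound _ _ (resid lam [cpoly1 lam; cpoly0 lam] (p lam) (p lam))
           _ (horner l (/ lam))); auto; try lra.
  - apply resid_deg1_quartic. lra.
  - apply horner_abs_le. rewrite Rabs_pos_eq; lra.
  - apply H, cpoly_orthogonal_tail; lra.
Qed.

Lemma resid_deg2_estimate : exists C, forall lam, 1 <= lam ->
  Rabs (resid lam [cpoly2 lam; cpoly1 lam; cpoly0 lam] (g lam) (g lam) - 6 * a ^ 2 * (/ lam) ^ 3)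
  <= C * (/ lam) ^ 4.
Proof.
  destruct resid_remainder_perturb as [c [Hc H]].
  set (l := [72 * a * b + 24 * b ^ 2; 216 * b ^ 2]).
  exists (6 * a ^ 2 + 2 * coef_abs_sum l + c). intros lam Hl. assert (Hx := inv_le_1 lam Hl).
  apply (perturbation_bound _ _ (resid lam [cpoly2 lam; cpoly1 lam; cpoly0 lam] (p lam) (p lam))
           _ (horner l (/ lam))); auto; try lra.
  - nra.
  - apply resid_deg2_quartic. lra.
  - apply horner_abs_le. rewrite Rabs_pos_eq; lra.
  - apply H, cpoly_orthogonal; lra.
Qed.

Lemma inner_cpoly2_estimate : exists C, forall lam, 1 <= lam ->
  Rabs (inner lam (g lam) (cpoly2 lam) - 2 * (/ lam) ^ 2) <= C * (/ lam) ^ 3.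
Proof.
  destruct inner_remainder_le as [c [Hc Hs]].
  set (l := [6 * a + 12 * b; 14 * b]).
  exists (coef_abs_sum l + c / 2 + 1). intros lam Hl. destruct (inv_le_1 lam Hl) as [Hx0 Hx1].
  assert (Hl0 : 0 <= lam) by lra.
  assert (Hps := poly_bounded_remainder lam ltac:(lra)).
  assert (Hc2 := poly_bounded_rpoly lam [- / lam; - / lam; 1]).
  assert (Hcross := resid_cross_le lam Hl0 [] (s lam) (cpoly2 lam) lam I Hps Hc2 ltac:(lra)).
  simpl in Hcross. fold (cpoly2 lam) in Hcross.
  rewrite inner_cpoly2_cpoly2 in Hcross by lra.
  change (inner lam (g lam) (cpoly2 lam)) with (resid lam [] (g lam) (cpoly2 lam)).
  rewrite (resid_ext lam [] _ (fun x => 1 * p lam x + 1 * s lam x) (cpoly2 lam) (cpoly2 lam))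
    by (intros; try reflexivity; rewrite quartic_plus_remainder; ring).
  rewrite resid_lin_l by first [lra | exact I | apply poly_bounded_rpoly | assumption].
  cbn [resid]. unfold p. rewrite inner_quartic_cpoly2 by lra. fold l.
  assert (Hh : Rabs (horner l (/ lam)) <= coef_abs_sum l)
    by (apply horner_abs_le; rewrite Rabs_pos_eq; lra).
  assert (H5 := Hs lam Hl).
  replace (1 * (2 * (/ lam) ^ 2 + (/ lam) ^ 3 * horner l (/ lam))
           + 1 * inner lam (s lam) (cpoly2 lam) - 2 * (/ lam) ^ 2)
    with ((/ lam) ^ 3 * horner l (/ lam) + inner lam (s lam) (cpoly2 lam)) by ring.
  eapply Rle_trans; [apply Rabs_triang|]. rewrite Rabs_mult, (Rabs_pos_eq ((/ lam) ^ 3))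
    by (apply pow_le; lra).
  assert (lam * inner lam (s lam) (s lam) <= c * (/ lam) ^ 3).
  { apply Rle_trans with (lam * (c * (/ lam) ^ 5)); [apply Rmult_le_compat_l; lra|].
    replace (lam * (c * (/ lam) ^ 5)) with (c * (/ lam) ^ 3 * / lam) by (field; lra).
    assert (0 <= c * (/ lam) ^ 3) by (apply Rmult_le_pos; [|apply pow_le]; lra).
    nra. }
  replace (2 * (/ lam) ^ 2 / lam) with (2 * (/ lam) ^ 3) in Hcross by (field; lra).
  assert (0 <= (/ lam) ^ 3) by (apply pow_le; lra).
  nra.
Qed.

Lemma rho_expansion : exists C L0, forall lam, L0 <= lam ->
  forall h A, (forall x, h x = lam * F (reldev lam x) + A * (x - lam)) ->
  Rabs (rho h lam - (1 - 3 * a ^ 2 / (2 * lam))) <= C / lam ^ 2.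
Proof.
  destruct resid_deg1_estimate as [C1 H1].
  destruct resid_deg2_estimate as [C2 H2].
  destruct inner_cpoly2_estimate as [C3 H3].
  set (beta := 3 * a ^ 2).
  set (C := (beta + Rabs C2 + beta * Rabs C1) ^ 2 / 3 + (Rabs C2 + beta * Rabs C1) / 2).
  exists C, (1 + Rabs C1 + Rabs C3 + 2 * (beta + Rabs C2 + beta * Rabs C1)).
  intros lam Hl h A Hh.
  assert (Hb : 0 <= beta) by (unfold beta; nra).
  generalize (Rabs_pos C1) (Rabs_pos C2) (Rabs_pos C3). intros HC1 HC2 HC3.
  assert (Hl1 : 1 <= lam) by nra.
  destruct (inv_le_1 lam Hl1) as [Hx0 Hx1].
  assert (Hx3 : 0 < (/ lam) ^ 3) by (apply pow_lt; lra).
  assert (Hx4 : 0 < (/ lam) ^ 4) by (apply pow_lt; lra).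
  replace (beta / (2 * lam)) with (beta * / lam / 2) by (field; lra).
  replace (C / lam ^ 2) with (C * (/ lam) ^ 2) by (field; lra). unfold C.
  apply (corr_expansion (/ lam) (resid lam [cpoly1 lam; cpoly0 lam] (g lam) (g lam))
           (resid lam [cpoly2 lam; cpoly1 lam; cpoly0 lam] (g lam) (g lam))
           (inner lam (g lam) (cpoly2 lam)) _ beta (Rabs C1) (Rabs C2) (Rabs C3)); auto.
  - apply (Rmult_le_reg_l lam); [lra|].
    rewrite Rmult_1_r, Rmult_comm, Rmult_assoc, Rinv_l, Rmult_1_r by lra. exact Hl.
  - eapply Rle_trans; [apply H1; auto|]. apply Rmult_le_compat_r; [lra | apply Rle_abs].
  - replace (2 * beta) with (6 * a ^ 2) by (unfold beta; ring).
    eapply Rle_trans; [apply H2; auto|]. apply Rmult_le_compat_r; [lra | apply Rle_abs].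
  - assert (H := H3 lam Hl1). apply Rabs_le_between in H.
    assert (C3 * (/ lam) ^ 3 <= Rabs C3 * (/ lam) ^ 3)
      by (apply Rmult_le_compat_r; [lra | apply Rle_abs]).
    lra.
  - cbn [resid]. rewrite inner_cpoly2_cpoly2 by lra. unfold Rdiv. ring.
  - rewrite (rho_affine lam ltac:(lra) h (g lam) A);
      [|apply poly_bounded_comp_reldev; lra | exact Hh].
    unfold Rdiv. rewrite Rinv_inv. ring.
Qed.

End Expansion.

Theorem lemma2p3 (lam : nat -> R) (Hpos : forall n, 0 < lam n)
  (Hlim : is_lim_seq lam p_infty) (d : R) (Hd : -1 < d) :
  exists (C : R) (N : nat), forall n : nat, (N <= n)%nat ->
    Rabs (rho (psi d (lam n)) (lam n)
          - (1 - (d - 1) ^ 2 / (6 * lam n))) <= C / (lam n) ^ 2.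
Proof.
  destruct (cressie_read_remainder d Hd) as [K [M HF]].
  destruct (rho_expansion (fun u => cressie_read d (1 + u)) ((d - 1) / 3) ((d - 1) * (d - 2) / 12)
              K M HF) as [C [L0 HC]].
  apply is_lim_seq_spec in Hlim. destruct (Hlim L0) as [N HN].
  exists C, N. intros n Hn.
  specialize (HN n Hn).
  replace ((d - 1) ^ 2 / (6 * lam n)) with (3 * ((d - 1) / 3) ^ 2 / (2 * lam n))
    by (field; apply Rgt_not_eq, Hpos).
  apply HC with (A := 2 / (d + 1)); [lra|].
  intros x. rewrite psi_eq_cressie_read by auto. unfold reldev.
  replace (1 + (x - lam n) / lam n) with (x / lam n) by (field; apply Rgt_not_eq, Hpos).
  reflexivity.
Qed.
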